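(* Let $\mathcal C\subset\mathbb R^2$ be a nonempty open bounded convex set with $0\in\mathcal C$, and let $P,Q$ be distinct points of $\mathbb R^2$ such that the closed segments $[P,Q]$ and $[-P,-Q]$ are contained in $\partial\mathcal C$. Let $\mathcal T$ be the open convex hull of $P,Q,-P,-Q$. Then for every $R>0$: (1) $\mathcal B_{\mathcal C}(0,R)\cap P0Q=\mathcal B_{\mathcal T}(0,R)\cap P0Q$; (2) $\mu_{\mathcal C}\big(\mathcal B_{\mathcal C}(0,R)\cap P0Q\big)\le 2\pi R^2$.
   Context: Let $\mathcal C\subset\mathbb R^m$ be a nonempty open bounded convex set. For distinct $p,q\in\mathcal C$, let $a,b$ be the intersection points of the straight line through $p,q$ with $\partial\mathcal C$, labelled so that $p=(1-s)a+sb$ and $q=(1-t)a+tb$ with $0<s<t<1$; the Hilbert metric is $d_{\mathcal C}(p,q)=\frac12\ln\!\big(\frac{1-s}{s}\cdot\frac{t}{1-t}\big)$, and $d_{\mathcal C}(p,p)=0$. The associated Finsler norm at $p\in\mathcal C$ is $F_{\mathcal C}(p,v)=\frac12\big(\frac1{t^-}+\frac1{t^+}\big)$ for $v\neq0$, where $t^\pm>0$ are the unique numbers with $p-t^-v\in\partial\mathcal C$ and $p+t^+v\in\partial\mathcal C$, and $F_{\mathcal C}(p,0)=0$. Let $B_{\mathcal C}(p)=\{v\in\mathbb R^m : F_{\mathcal C}(p,v)<1\}$, let $\mathrm{vol}$ be Lebesgue measure on $\mathbb R^m$ and $\omega_m$ the Lebesgue volume of the Euclidean unit ball (so $\omega_2=\pi$).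 The Hilbert measure is $\mu_{\mathcal C}(A)=\int_A\frac{\omega_m}{\mathrm{vol}(B_{\mathcal C}(p))}\,d\mathrm{vol}(p)$ for Borel $A\subset\mathcal C$. When $0\in\mathcal C$ and $R>0$, $\mathcal B_{\mathcal C}(0,R)=\{p\in\mathcal C : d_{\mathcal C}(0,p)<R\}$ denotes the open metric ball. The same notation applies to the open convex set $\mathcal T$. For three distinct points $a,b,c\in\mathbb R^2$, $abc$ denotes their open convex hull (open triangle); so $P0Q$ is the open triangle with vertices $P$, $0$, $Q$. *)

From Stdlib Require Import Reals Lra ClassicalEpsilon.
Open Scope R_scope.

Definition pt : Type := (R * R)%type.
Definition porig : pt := (0, 0).
Definition padd (p q : pt) : pt := (fst p + fst q, snd p + snd q).
Definition pscal (a : R) (p : pt) : pt := (a * fst p, a * snd p).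
Definition popp (p : pt) : pt := pscal (-1) p.
Definition pnorm (p : pt) : R := sqrt (fst p ^ 2 + snd p ^ 2).
Definition pdist (p q : pt) : R := pnorm (padd p (popp q)).

Definition is_open (C : pt -> Prop) : Prop :=
  forall p, C p -> exists e, 0 < e /\ forall q, pdist q p < e -> C q.
Definition is_bounded (C : pt -> Prop) : Prop :=
  exists M, forall p, C p -> pnorm p <= M.
Definition is_convex (C : pt -> Prop) : Prop :=
  forall p q t, C p -> C q -> 0 <= t <= 1 ->
    C (padd (pscal (1 - t) p) (pscal t q)).
Definition closure (C : pt -> Prop) (x : pt) : Prop :=
  forall e, 0 < e -> exists q, C q /\ pdist q x < e.
(** boundary = closure minus interior (C is open, so interior = C) *)
Definition boundary (C : pt -> Prop) (x : pt) : Prop :=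
  closure C x /\ ~ C x.

Definition segment (P Q : pt) (x : pt) : Prop :=
  exists t, 0 <= t <= 1 /\ x = padd (pscal (1 - t) P) (pscal t Q).

Definition open_hull3 (a b c : pt) (x : pt) : Prop :=
  exists l1 l2 l3, 0 < l1 /\ 0 < l2 /\ 0 < l3 /\ l1 + l2 + l3 = 1 /\
    x = padd (pscal l1 a) (padd (pscal l2 b) (pscal l3 c)).
Definition open_hull4 (a b c d : pt) (x : pt) : Prop :=
  exists l1 l2 l3 l4, 0 < l1 /\ 0 < l2 /\ 0 < l3 /\ 0 < l4 /\
    l1 + l2 + l3 + l4 = 1 /\
    x = padd (pscal l1 a) (padd (pscal l2 b) (padd (pscal l3 c) (pscal l4 d))).

Definition hilbert_dist (C : pt -> Prop) (p q : pt) (d : R) : Prop :=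
  (p = q /\ d = 0) \/
  (p <> q /\ exists a b s t,
      boundary C a /\ boundary C b /\ 0 < s /\ s < t /\ t < 1 /\
      p = padd (pscal (1 - s) a) (pscal s b) /\
      q = padd (pscal (1 - t) a) (pscal t b) /\
      d = / 2 * ln ((1 - s) / s * (t / (1 - t)))).

Definition hilbert_ball (C : pt -> Prop) (Rad : R) (p : pt) : Prop :=
  C p /\ exists d, hilbert_dist C porig p d /\ d < Rad.

Definition finsler (C : pt -> Prop) (p v : pt) (f : R) : Prop :=
  (v = porig /\ f = 0) \/
  (v <> porig /\ exists tm tp, 0 < tm /\ 0 < tp /\
      boundary C (padd p (pscal (- tm) v)) /\
      boundary C (padd p (pscal tp v)) /\
      f = / 2 * (/ tm + / tp)).

Definition finsler_ball (C : pt -> Prop) (p : pt) (v : pt) : Prop :=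
  exists f, finsler C p v f /\ f < 1.

(** * Lebesgue (outer) measure via countable covers by closed boxes *)
Record box2 := Box2 { b2x1 : R; b2x2 : R; b2y1 : R; b2y2 : R }.
Definition box2_vol (b : box2) : R :=
  Rmax 0 (b2x2 b - b2x1 b) * Rmax 0 (b2y2 b - b2y1 b).
Definition in_box2 (b : box2) (p : pt) : Prop :=
  b2x1 b <= fst p <= b2x2 b /\ b2y1 b <= snd p <= b2y2 b.
Definition cover_sum2 (A : pt -> Prop) (s : R) : Prop :=
  exists c : nat -> box2,
    (forall x, A x -> exists n, in_box2 (c n) x) /\
    Un_cv (fun N => sum_f_R0 (fun n => box2_vol (c n)) N) s.
(** Lebesgue measure of A (the infimum of the cover sums; used only for
    bounded sets, where it is finite). *)
Definition lebesgue2 (A : pt -> Prop) : R :=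
  epsilon (inhabits 0) (fun m =>
    (forall s, cover_sum2 A s -> m <= s) /\
    (forall e, 0 < e -> exists s, cover_sum2 A s /\ s < m + e)).

Record box3 := Box3 { b3x1 : R; b3x2 : R; b3y1 : R; b3y2 : R;
                      b3z1 : R; b3z2 : R }.
Definition box3_vol (b : box3) : R :=
  Rmax 0 (b3x2 b - b3x1 b) * Rmax 0 (b3y2 b - b3y1 b) *
  Rmax 0 (b3z2 b - b3z1 b).
Definition in_box3 (b : box3) (x : pt * R) : Prop :=
  b3x1 b <= fst (fst x) <= b3x2 b /\ b3y1 b <= snd (fst x) <= b3y2 b /\
  b3z1 b <= snd x <= b3z2 b.
Definition cover_sum3 (S : pt * R -> Prop) (s : R) : Prop :=
  exists c : nat -> box3,
    (forall x, S x -> exists n, in_box3 (c n) x) /\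
    Un_cv (fun N => sum_f_R0 (fun n => box3_vol (c n)) N) s.
Definition lebesgue3_le (S : pt * R -> Prop) (K : R) : Prop :=
  forall e, 0 < e -> exists s, cover_sum3 S s /\ s <= K + e.

(** * Hilbert measure: density omega_2 / vol(B_C(p)) with omega_2 = PI *)
Definition hilbert_density (C : pt -> Prop) (p : pt) : R :=
  PI / lebesgue2 (finsler_ball C p).

(** mu_C(A) <= K, where mu_C(A) = int_A density dvol is expressed as the
    3-dimensional Lebesgue measure of the subgraph {(p,y) | p in A, 0<=y<density p}. *)
Definition hilbert_measure_le (C : pt -> Prop) (A : pt -> Prop) (K : R) : Prop :=
  lebesgue3_le (fun x => A (fst x) /\ 0 <= snd x < hilbert_density C (fst x)) K.

From Stdlib Require Import Reals Lra Lia List ClassicalEpsilon.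
From mathcomp Require all_boot all_order all_algebra all_classical all_reals all_analysis.
From mathcomp Require Rstruct.
Open Scope R_scope.

(** In the coordinates [(X, Y)] in which [P = (1, -1)] and [Q = (1, 1)], the
    parallelogram [T] is the square [|X|, |Y| < 1] and the triangle [P0Q] is
    [|Y| < X < 1].  (1) A point [x] of the triangle is [X x] times a point [z]
    of the open side [(P, Q)]; the line through [0] and [x] meets the
    boundaries of both [C] and [T] exactly at [z] and [-z], so both Hilbert
    distances from [0] equal [artanh (X x)].  (2) The Finsler unit ball of [C]
    at [p] contains the vectors [v] with [p +- v] in [T], a parallelogram of
    area [2 |D| (1 - X) (1 - |Y|)] ([D = det (P, Q)]), which bounds the
    density; in coordinates the subgraph of the density over the ball is
    covered by boxes over a grid whose volume is governed by a Riemann sum of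
    [1/(1 - X)] over [[0, tanh R]], below [-ln (1 - tanh R) < 2 R]. *)

Fixpoint rsum (f : nat -> R) (n : nat) : R :=
  match n with O => 0 | S m => rsum f m + f m end.

Lemma rsum_sum_f (f : nat -> R) N : rsum f (S N) = sum_f_R0 f N.
Proof. induction N as [|N IH]. - simpl. ring. - rewrite tech5, <- IH. reflexivity. Qed.

Lemma rsum_ext (f g : nat -> R) n :
  (forall i, (i < n)%nat -> f i = g i) -> rsum f n = rsum g n.
Proof.
  induction n as [|n IH]; intros H; simpl; auto.
  rewrite H by lia. rewrite IH; [reflexivity|]. intros i Hi. apply H. lia.
Qed.

Lemma rsum_le (f g : nat -> R) n :
  (forall i, (i < n)%nat -> f i <= g i) -> rsum f n <= rsum g n.
Proof.
  induction n as [|n IH]; intros H; simpl. - lra.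
  - assert (f n <= g n) by (apply H; lia).
    assert (rsum f n <= rsum g n) by (apply IH; intros; apply H; lia). lra.
Qed.

Lemma rsum_const k n : rsum (fun _ => k) n = INR n * k.
Proof. induction n as [|n IH]; simpl rsum. - simpl. ring. - rewrite IH, S_INR. ring. Qed.

Lemma rsum_nonneg (f : nat -> R) n : (forall i, (i < n)%nat -> 0 <= f i) -> 0 <= rsum f n.
Proof.
  intros H. replace 0 with (rsum (fun _ => 0) n) by (rewrite rsum_const; ring).
  apply rsum_le. exact H.
Qed.

Lemma rsum_plus (f g : nat -> R) n : rsum (fun i => f i + g i) n = rsum f n + rsum g n.
Proof. induction n as [|n IH]; simpl. - ring. - rewrite IH. ring. Qed.

Lemma rsum_scal (f : nat -> R) k n : rsum (fun i => k * f i) n = k * rsum f n.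
Proof. induction n as [|n IH]; simpl. - ring. - rewrite IH. ring. Qed.

Lemma rsum_tele (g : nat -> R) n : rsum (fun i => g i - g (S i)) n = g O - g n.
Proof. induction n as [|n IH]; simpl. - ring. - rewrite IH. ring. Qed.

Lemma rsum_prod (a b : nat -> R) n m :
  rsum (fun i => rsum (fun j => a i * b j) m) n = rsum a n * rsum b m.
Proof. induction n as [|n IH]; simpl. - ring. - rewrite IH, rsum_scal. ring. Qed.

Lemma rsum_shift (g : nat -> R) n : rsum g (S n) = g O + rsum (fun k => g (S k)) n.
Proof.
  induction n as [|n IH]. - simpl. ring.
  - change (rsum g (S (S n))) with (rsum g (S n) + g (S n)). rewrite IH. simpl. ring.
Qed.

Lemma rsum_geom e n : rsum (fun i => e / 2 ^ S i) n = e * (1 - / 2 ^ n).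
Proof.
  induction n as [|n IH]. - simpl. field.
  - change (rsum (fun i => e / 2 ^ S i) (S n))
      with (rsum (fun i => e / 2 ^ S i) n + e / 2 ^ S n).
    rewrite IH. simpl. field. apply pow_nonzero. lra.
Qed.

Lemma Rabs_le_inv a b : Rabs a <= b -> - b <= a <= b.
Proof. unfold Rabs; destruct Rcase_abs; intros; lra. Qed.

Fixpoint lsum {B : Type} (vol : B -> R) (l : list B) : R :=
  match l with nil => 0 | b :: l' => vol b + lsum vol l' end.

Lemma lsum_app {B : Type} (vol : B -> R) l1 l2 :
  lsum vol (l1 ++ l2) = lsum vol l1 + lsum vol l2.
Proof. induction l1 as [|b l1 IH]; simpl. - ring. - rewrite IH. ring. Qed.

Lemma lsum_flat_map {B : Type} (vol : B -> R) (F : nat -> list B) n :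
  lsum vol (flat_map F (seq 0 n)) = rsum (fun i => lsum vol (F i)) n.
Proof.
  assert (H : forall m, lsum vol (flat_map F (seq m n))
                        = rsum (fun i => lsum vol (F (m + i)%nat)) n).
  { induction n as [|n IH]; intros m; [reflexivity|]. cbn [seq flat_map].
    rewrite lsum_app, IH, rsum_shift, Nat.add_0_r. f_equal. apply rsum_ext.
    intros i _. do 2 f_equal. lia. }
  rewrite H. apply rsum_ext. auto.
Qed.

(** * Outer measures defined by countable covers

    Both [cover_sum2] and [cover_sum3] are instances of the following notion:
    [cov A s] says that [A] is covered by a sequence of boxes whose volumes
    sum to [s]. *)
Section Covers.
Variables (Bx X : Type) (vol : Bx -> R) (inb : Bx -> X -> Prop).
Hypothesis vol_nn : forall b, 0 <= vol b.

Definition cov (A : X -> Prop) (s : R) : Prop :=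
  exists c : nat -> Bx,
    (forall x, A x -> exists n, inb (c n) x) /\
    Un_cv (fun N => sum_f_R0 (fun n => vol (c n)) N) s.

Lemma lsum_nn l : 0 <= lsum vol l.
Proof. induction l as [|b l IH]; simpl. - lra. - specialize (vol_nn b). lra. Qed.

Lemma cov_mono A A' s : cov A s -> (forall x, A' x -> A x) -> cov A' s.
Proof. intros [c [Hc Hs]] H. exists c. split; auto. Qed.

Lemma cov_partial_le (c : nat -> Bx) s :
  Un_cv (fun N => sum_f_R0 (fun n => vol (c n)) N) s ->
  forall N, sum_f_R0 (fun n => vol (c n)) N <= s.
Proof.
  intros H N. apply (growing_ineq _ s); auto.
  intro n. rewrite tech5. specialize (vol_nn (c (S n))). lra.
Qed.

Lemma cov_nonneg A s : cov A s -> 0 <= s.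
Proof.
  intros [c [_ H]]. eapply Rle_trans; [|apply (cov_partial_le c s H 0)].
  simpl. apply vol_nn.
Qed.

(** A sequence of boxes with bounded partial sums yields a cover sum below
    the bound (the partial sums converge, being increasing and bounded). *)
Lemma cov_of_bound A (c : nat -> Bx) K :
  (forall x, A x -> exists n, inb (c n) x) ->
  (forall N, sum_f_R0 (fun n => vol (c n)) N <= K) ->
  exists s, cov A s /\ s <= K.
Proof.
  intros Hc Hb.
  destruct (growing_cv (fun N => sum_f_R0 (fun n => vol (c n)) N)) as [l Hl].
  { intro n. rewrite tech5. specialize (vol_nn (c (S n))). lra. }
  { exists K. intros y [N ->]. apply Hb. }
  exists l. split. { exists c. split; auto. }
  apply Rnot_lt_le. intro h.
  destruct (Hl (l - K)) as [N HN]; [lra|].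
  specialize (HN N (le_n N)). specialize (Hb N). unfold R_dist in HN.
  apply Rabs_def2 in HN. lra.
Qed.

Definition refines (g : X -> X) (k : R) : Prop :=
  forall b e, 0 < e -> exists l, l <> nil /\
    (forall x, inb b (g x) -> exists b', In b' l /\ inb b' x) /\
    lsum vol l <= k * vol b + e.

Definition scales (g : X -> X) (k : R) : Prop :=
  forall A s e, cov A s -> 0 < e ->
    exists s', cov (fun x => A (g x)) s' /\ s' <= k * s + e.

Section ZeroBox.
(** A box of volume zero is used as padding when a finite list of boxes is
    turned into a sequence. *)
Variable d : Bx.
Hypothesis vol_d : vol d = 0.

Lemma sum_nth_le l N : sum_f_R0 (fun n => vol (nth n l d)) N <= lsum vol l.
Proof.
  revert N. induction l as [|b l IH]; intros N.
  - simpl. induction N as [|N IHN]; simpl; rewrite vol_d; [lra|]. simpl in IHN. lra.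
  - destruct N as [|N].
    + simpl. specialize (lsum_nn l). lra.
    + rewrite decomp_sum by lia. simpl. specialize (IH N). simpl in IH. lra.
Qed.

Lemma cov_of_list A (l : list Bx) :
  (forall x, A x -> exists b, In b l /\ inb b x) -> exists s, cov A s /\ s <= lsum vol l.
Proof.
  intros Hc. apply (cov_of_bound A (fun n => nth n l d)).
  - intros x Hx. destruct (Hc x Hx) as [b [Hb1 Hb2]].
    destruct (In_nth l b d Hb1) as [n [_ Hn]]. exists n. rewrite Hn. auto.
  - apply sum_nth_le.
Qed.

Fixpoint concat_upto (L : nat -> list Bx) (N : nat) : list Bx :=
  match N with O => nil | S M => concat_upto L M ++ L M end.

Lemma concat_upto_nth L N M m : (N <= M)%nat -> (m < length (concat_upto L N))%nat ->
  nth m (concat_upto L M) d = nth m (concat_upto L N) d.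
Proof.
  intros H. induction H as [|M H IH]; intros Hm; auto. simpl. rewrite app_nth1; auto.
  assert (length (concat_upto L N) <= length (concat_upto L M))%nat.
  { clear -H. induction H as [|M H IH]; auto. simpl. rewrite length_app. lia. }
  lia.
Qed.

Lemma concat_upto_length L : (forall n, L n <> nil) ->
  forall N, (N <= length (concat_upto L N))%nat.
Proof.
  intros Lne N. induction N as [|N IH]; simpl; [lia|].
  rewrite length_app. specialize (Lne N). destruct (L N); [congruence|]. simpl. lia.
Qed.

Lemma lsum_concat_upto L N : lsum vol (concat_upto L N) = rsum (fun n => lsum vol (L n)) N.
Proof. induction N as [|N IH]; simpl; auto. rewrite lsum_app, IH. auto. Qed.

Lemma cov_of_lists A (L : nat -> list Bx) K :
  (forall n, L n <> nil) ->
  (forall x, A x -> exists n b, In b (L n) /\ inb b x) ->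
  (forall N, rsum (fun n => lsum vol (L n)) N <= K) ->
  exists s, cov A s /\ s <= K.
Proof.
  intros Lne Hc Hb. set (f := fun m => nth m (concat_upto L (S m)) d).
  assert (Hf : forall N m, (m < S N)%nat -> f m = nth m (concat_upto L (S N)) d).
  { intros N m Hm. unfold f. destruct (Nat.le_gt_cases (S m) (S N)) as [h|h].
    - symmetry. apply concat_upto_nth; auto. specialize (concat_upto_length L Lne (S m)). lia.
    - apply concat_upto_nth. lia. specialize (concat_upto_length L Lne (S N)). lia. }
  apply (cov_of_bound _ f).
  - intros x Hx. destruct (Hc x Hx) as [n [b [Hb1 Hb2]]].
    destruct (In_nth (L n) b d Hb1) as [k [Hk Hnth]].
    set (m := (length (concat_upto L n) + k)%nat). exists m.
    assert (Hmlt : (m < length (concat_upto L (S n)))%nat) by (simpl; rewrite length_app; unfold m; lia).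
    assert (Hm : nth m (concat_upto L (S n)) d = b).
    { simpl. unfold m. rewrite app_nth2 by lia. rewrite Nat.add_comm, Nat.add_sub. auto. }
    destruct (Nat.le_gt_cases (S n) (S m)) as [h|h].
    + unfold f. rewrite (concat_upto_nth L (S n) (S m) m h Hmlt), Hm. auto.
    + rewrite (Hf n m) by lia. rewrite Hm. auto.
  - intros N. rewrite (sum_eq _ (fun n => vol (nth n (concat_upto L (S N)) d)))
      by (intros i Hi; rewrite (Hf N i) by lia; reflexivity).
    eapply Rle_trans; [apply sum_nth_le|]. rewrite lsum_concat_upto. apply Hb.
Qed.

(** Refining every box of a cover, with errors [e/2^(n+1)], proves the
    scaling of outer measures. *)
Lemma refines_scales g k : 0 <= k -> refines g k -> scales g k.
Proof.
  intros Hk Href A s e [c [Hc Hs]] He.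
  assert (HL : forall n, {l | l <> nil /\
    (forall x, inb (c n) (g x) -> exists b', In b' l /\ inb b' x) /\
    lsum vol l <= k * vol (c n) + e / 2 ^ S n}).
  { intro n. apply constructive_indefinite_description, Href.
    apply Rdiv_lt_0_compat; [auto|apply pow_lt; lra]. }
  apply (cov_of_lists _ (fun n => proj1_sig (HL n))).
  - intro n. exact (proj1 (proj2_sig (HL n))).
  - intros x Hx. destruct (Hc (g x) Hx) as [n Hn]. exists n.
    exact (proj1 (proj2 (proj2_sig (HL n))) x Hn).
  - intros N. eapply Rle_trans.
    { apply rsum_le with (g := fun n => k * vol (c n) + e / 2 ^ S n).
      intros i _. exact (proj2 (proj2 (proj2_sig (HL i)))). }
    rewrite rsum_plus, rsum_scal, rsum_geom.
    assert (Hpart : rsum (fun n => vol (c n)) N <= s).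
    { destruct N as [|N].
      - simpl. eapply Rle_trans; [apply vol_nn|]. apply (cov_partial_le c s Hs 0).
      - rewrite rsum_sum_f. apply cov_partial_le; auto. }
    assert (0 < / 2 ^ N) by (apply Rinv_0_lt_compat, pow_lt; lra).
    assert (k * rsum (fun n => vol (c n)) N <= k * s) by (apply Rmult_le_compat_l; auto).
    nra.
Qed.

End ZeroBox.

Lemma scales_comp g1 g2 k1 k2 : scales g1 k1 -> scales g2 k2 -> 0 <= k2 ->
  scales (fun y => g1 (g2 y)) (k2 * k1).
Proof.
  intros H1 H2 Hk2 A s e Hs He.
  destruct (H1 A s (e / (2 * (k2 + 1))) Hs) as [s1 [Hs1 Hs1b]].
  { apply Rdiv_lt_0_compat; lra. }
  destruct (H2 _ s1 (e / 2) Hs1) as [s2 [Hs2 Hs2b]]; [lra|].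
  exists s2. split; auto.
  assert (k2 * s1 <= k2 * (k1 * s + e / (2 * (k2 + 1)))) by (apply Rmult_le_compat_l; auto).
  assert (k2 * (e / (2 * (k2 + 1))) <= e / 2).
  { apply Rmult_le_reg_r with (2 * (k2 + 1)); [lra|].
    replace (k2 * (e / (2 * (k2 + 1))) * (2 * (k2 + 1))) with (k2 * e) by (field; lra). nra. }
  nra.
Qed.

Lemma scales_ext g g' k : scales g k -> (forall y, g y = g' y) -> scales g' k.
Proof.
  intros H Heq A s e Hs He. destruct (H A s e Hs He) as [s' [Hs' Hb]].
  exists s'. split; auto. eapply cov_mono; [exact Hs'|]. intros x Hx. cbv beta in *. rewrite Heq. exact Hx.
Qed.

End Covers.

Arguments cov {Bx X} vol inb A s.
Arguments refines {Bx X} vol inb g k.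
Arguments scales {Bx X} vol inb g k.

(** * Linear changes of variables for box-cover outer measures

    A linear map of determinant [D <> 0] multiplies the outer measures of
    preimages by at most [1/|D|].  It is proved for swaps, diagonal maps and
    shears by refining boxes, and follows for all invertible linear maps by
    composition.  The same argument works in the plane and, acting on the
    first two coordinates, in space. *)

Lemma box2_vol_nn b : 0 <= box2_vol b.
Proof. unfold box2_vol. apply Rmult_le_pos; apply Rmax_l. Qed.

Lemma box3_vol_nn b : 0 <= box3_vol b.
Proof. unfold box3_vol. repeat apply Rmult_le_pos; apply Rmax_l. Qed.

Definition box2_0 : box2 := Box2 0 0 0 0.
Definition box3_0 : box3 := Box3 0 0 0 0 0 0.

Lemma box2_0_vol : box2_vol box2_0 = 0.
Proof. unfold box2_vol; simpl. rewrite Rmax_left by lra. ring. Qed.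

Lemma box3_0_vol : box3_vol box3_0 = 0.
Proof. unfold box3_vol; simpl. rewrite Rmax_left by lra. ring. Qed.

Lemma grid_cell (K : nat) (a d y : R) : (1 <= K)%nat -> 0 <= d -> a <= y <= a + INR K * d ->
  exists k, (k < K)%nat /\ a + INR k * d <= y <= a + INR (S k) * d.
Proof.
  intros HK Hd. induction HK as [|K HK IH]; intros Hy.
  - exists 0%nat. split; [lia|]. simpl in *. lra.
  - destruct (Rle_dec y (a + INR K * d)) as [h|h].
    + destruct IH as [k [Hk1 Hk2]]; [lra|]. exists k. split; [lia|auto].
    + exists K. split; [lia|lra].
Qed.

Lemma refines_empty_box (g : pt -> pt) k b e : 0 <= k -> 0 < e ->
  ~ (b2x1 b <= b2x2 b /\ b2y1 b <= b2y2 b) ->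
  exists l, l <> nil /\
    (forall x, in_box2 b (g x) -> exists b', In b' l /\ in_box2 b' x) /\
    lsum box2_vol l <= k * box2_vol b + e.
Proof.
  intros Hk He Hne. exists (box2_0 :: nil). split; [discriminate|split].
  - intros x [H1 H2]. exfalso. apply Hne. lra.
  - simpl. rewrite box2_0_vol.
    assert (0 <= k * box2_vol b) by (apply Rmult_le_pos; auto; apply box2_vol_nn). lra.
Qed.

Definition swap (x : pt) : pt := (snd x, fst x).
Definition diag (a b : R) (x : pt) : pt := (a * fst x, b * snd x).
Definition shear (c : R) (x : pt) : pt := (fst x + c * snd x, snd x).
Definition lin (a b c d : R) (x : pt) : pt := (a * fst x + b * snd x, c * fst x + d * snd x).

Lemma swap_refines : refines box2_vol in_box2 swap 1.
Proof.
  intros [x1 x2 y1 y2] e He. exists (Box2 y1 y2 x1 x2 :: nil). split; [discriminate|split].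
  - intros [u v] [H1 H2]. simpl in *. exists (Box2 y1 y2 x1 x2). split; [left; auto|].
    split; simpl; auto.
  - simpl. unfold box2_vol; simpl. lra.
Qed.

Definition div_lo (a x1 x2 : R) := if Rlt_dec 0 a then x1 / a else x2 / a.
Definition div_hi (a x1 x2 : R) := if Rlt_dec 0 a then x2 / a else x1 / a.

Lemma div_lohi_in (a x1 x2 x : R) : a <> 0 -> x1 <= a * x <= x2 ->
  div_lo a x1 x2 <= x <= div_hi a x1 x2.
Proof.
  intros Ha H. unfold div_lo, div_hi. destruct (Rlt_dec 0 a) as [h|h].
  - split; apply Rmult_le_reg_l with a; auto.
    + replace (a * (x1 / a)) with x1 by (field; lra). lra.
    + replace (a * (x2 / a)) with x2 by (field; lra). lra.
  - split; apply Rmult_le_reg_l with (- a); try lra.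
    + replace (- a * (x2 / a)) with (- x2) by (field; lra). lra.
    + replace (- a * (x1 / a)) with (- x1) by (field; lra). lra.
Qed.

Lemma div_lohi_len (a x1 x2 : R) : a <> 0 ->
  div_hi a x1 x2 - div_lo a x1 x2 = (x2 - x1) / Rabs a.
Proof.
  intros Ha. unfold div_lo, div_hi. destruct (Rlt_dec 0 a) as [h|h].
  - rewrite Rabs_right by lra. field. auto.
  - rewrite Rabs_left by lra. field. auto.
Qed.

Lemma diag_refines a b : a <> 0 -> b <> 0 ->
  refines box2_vol in_box2 (diag a b) (/ (Rabs a * Rabs b)).
Proof.
  intros Ha Hb [x1 x2 y1 y2] e He.
  assert (Hpa : 0 < Rabs a) by (apply Rabs_pos_lt; auto).
  assert (Hpb : 0 < Rabs b) by (apply Rabs_pos_lt; auto).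
  destruct (classic (x1 <= x2 /\ y1 <= y2)) as [[hx hy]|hne].
  2: { apply refines_empty_box; auto. apply Rlt_le, Rinv_0_lt_compat. nra. }
  exists (Box2 (div_lo a x1 x2) (div_hi a x1 x2) (div_lo b y1 y2) (div_hi b y1 y2) :: nil).
  split; [discriminate|split].
  - intros [u v] [H1 H2]. simpl in *. eexists. split; [left; reflexivity|].
    split; simpl; apply div_lohi_in; auto.
  - simpl. unfold box2_vol; simpl. rewrite (div_lohi_len a), (div_lohi_len b) by auto.
    assert (0 <= (x2 - x1) / Rabs a) by (apply Rle_mult_inv_pos; lra).
    assert (0 <= (y2 - y1) / Rabs b) by (apply Rle_mult_inv_pos; lra).
    rewrite !Rmax_right by lra.
    replace ((x2 - x1) / Rabs a * ((y2 - y1) / Rabs b))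
      with (/ (Rabs a * Rabs b) * ((x2 - x1) * (y2 - y1))) by (field; lra).
    lra.
Qed.

Lemma Rmax_Rmin_diff u v : Rmax u v - Rmin u v = Rabs (u - v).
Proof.
  unfold Rmax, Rmin. destruct (Rle_dec u v).
  - rewrite Rabs_left1 by lra. ring.
  - rewrite Rabs_right by lra. ring.
Qed.

(** The box covering the part of the sheared box [[x1, x2] x [y1, ...]] over
    the [k]-th horizontal cell [[y1 + k dl, y1 + (k+1) dl]]. *)
Definition shear_strip (c x1 x2 y1 dl : R) (k : nat) : box2 :=
  let ya := y1 + INR k * dl in let yb := y1 + INR (S k) * dl in
  Box2 (x1 - Rmax (c * ya) (c * yb)) (x2 - Rmin (c * ya) (c * yb)) ya yb.

Lemma shear_strip_in c x1 x2 y1 dl k u v : 0 <= dl -> x1 <= u + c * v <= x2 ->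
  y1 + INR k * dl <= v <= y1 + INR (S k) * dl -> in_box2 (shear_strip c x1 x2 y1 dl k) (u, v).
Proof.
  intros Hdl Hu Hv. rewrite S_INR in *.
  assert (Rmin (c * (y1 + INR k * dl)) (c * (y1 + (INR k + 1) * dl)) <= c * v
          <= Rmax (c * (y1 + INR k * dl)) (c * (y1 + (INR k + 1) * dl))).
  { unfold Rmin, Rmax. destruct (Rle_dec _ _); destruct (Rle_dec 0 c); nra. }
  unfold shear_strip, in_box2. cbv zeta. cbn [b2x1 b2x2 b2y1 b2y2 fst snd].
  rewrite S_INR. lra.
Qed.

Lemma shear_strip_vol c x1 x2 y1 dl k : x1 <= x2 -> 0 <= dl ->
  box2_vol (shear_strip c x1 x2 y1 dl k) = (x2 - x1 + Rabs c * dl) * dl.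
Proof.
  intros Hx Hdl. unfold box2_vol, shear_strip. cbn [b2x1 b2x2 b2y1 b2y2].
  set (ya := y1 + INR k * dl). set (yb := y1 + INR (S k) * dl).
  assert (Hab : ya - yb = - dl) by (unfold ya, yb; rewrite S_INR; ring).
  replace (x2 - Rmin (c * ya) (c * yb) - (x1 - Rmax (c * ya) (c * yb)))
    with (x2 - x1 + Rabs (c * ya - c * yb)) by (rewrite <- Rmax_Rmin_diff; ring).
  replace (c * ya - c * yb) with (c * (ya - yb)) by ring.
  rewrite Hab, Rabs_mult, Rabs_Ropp, (Rabs_right dl) by lra.
  replace (yb - ya) with dl by lra.
  rewrite !Rmax_right; [ring|lra|]. specialize (Rabs_pos c). nra.
Qed.

(** The preimage of a box under a shear is a parallelogram; cutting it into
    [K] horizontal strips, each covered by a box slightly wider than the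
    parallelogram, costs an extra area [|c| h^2 / K]. *)
Lemma shear_refines c : refines box2_vol in_box2 (shear c) 1.
Proof.
  intros [x1 x2 y1 y2] e He.
  destruct (classic (x1 <= x2 /\ y1 <= y2)) as [[hx hy]|hne].
  2: { apply refines_empty_box; auto; lra. }
  set (h := y2 - y1).
  destruct (INR_unbounded (Rabs c * h * h / e)) as [K0 HK0].
  set (K := S K0).
  assert (HK : 0 < INR K) by (unfold K; rewrite S_INR; specialize (pos_INR K0); lra).
  set (dl := h / INR K).
  assert (Hdl : 0 <= dl) by (unfold dl; apply Rle_mult_inv_pos; unfold h; lra).
  exists (flat_map (fun k => shear_strip c x1 x2 y1 dl k :: nil) (seq 0 K)).
  split; [unfold K; discriminate|split].
  - intros [u v] [H1 H2]. unfold shear in H1, H2. simpl in H1, H2.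
    assert (Hv : y1 <= v <= y1 + INR K * dl)
      by (replace (y1 + INR K * dl) with y2 by (unfold dl, h; field; lra); lra).
    destruct (grid_cell K y1 dl v) as [k [Hk1 Hk2]]; [unfold K; lia|auto|auto|].
    exists (shear_strip c x1 x2 y1 dl k). split.
    + apply in_flat_map. exists k. split; [apply in_seq; lia|left; auto].
    + apply shear_strip_in; auto.
  - rewrite lsum_flat_map, (rsum_ext _ (fun _ => (x2 - x1 + Rabs c * dl) * dl))
      by (intros i _; simpl; rewrite shear_strip_vol by auto; ring).
    rewrite rsum_const. unfold box2_vol; cbn [b2x1 b2x2 b2y1 b2y2]. fold h.
    rewrite !Rmax_right by (unfold h; lra).
    replace (INR K * ((x2 - x1 + Rabs c * dl) * dl))
      with ((x2 - x1) * h + Rabs c * h * h / INR K) by (unfold dl; field; lra).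
    assert (HKe : Rabs c * h * h < e * INR K).
    { apply Rmult_lt_compat_l with (r := e) in HK0; auto.
      replace (e * (Rabs c * h * h / e)) with (Rabs c * h * h) in HK0 by (field; lra).
      unfold K. rewrite S_INR. lra. }
    assert (Rabs c * h * h / INR K <= e).
    { apply Rmult_le_reg_r with (INR K); auto.
      replace (Rabs c * h * h / INR K * INR K) with (Rabs c * h * h) by (field; lra). lra. }
    lra.
Qed.

Definition lift3 (g : pt -> pt) (x : pt * R) : pt * R := (g (fst x), snd x).

Definition box3_of (b : box2) (z1 z2 : R) : box3 :=
  Box3 (b2x1 b) (b2x2 b) (b2y1 b) (b2y2 b) z1 z2.

Lemma lsum_box3_of (l : list box2) z1 z2 :
  lsum box3_vol (map (fun b => box3_of b z1 z2) l) = lsum box2_vol l * Rmax 0 (z2 - z1).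
Proof. induction l as [|b l IH]; simpl. - ring. - rewrite IH. unfold box3_vol, box2_vol; simpl. ring. Qed.

Lemma refines_lift3 g k : 0 <= k -> refines box2_vol in_box2 g k ->
  refines box3_vol in_box3 (lift3 g) k.
Proof.
  intros Hk H [x1 x2 y1 y2 z1 z2] e He.
  set (zl := Rmax 0 (z2 - z1)).
  assert (Hzl : 0 <= zl) by apply Rmax_l.
  destruct (H (Box2 x1 x2 y1 y2) (e / (zl + 1))) as [l [Hne [Hcov Hsum]]].
  { apply Rdiv_lt_0_compat; lra. }
  exists (map (fun b => box3_of b z1 z2) l). split; [destruct l; [congruence|discriminate]|split].
  - intros [p z] [Hx [Hy Hz]]. simpl in Hx, Hy, Hz.
    destruct (Hcov p (conj Hx Hy)) as [b' [Hb' [Hin1 Hin2]]].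
    exists (box3_of b' z1 z2). split; [apply (in_map (fun b => box3_of b z1 z2)); auto|].
    unfold box3_of, in_box3; simpl. auto.
  - rewrite lsum_box3_of. fold zl. unfold box3_vol. simpl. fold zl.
    change (box2_vol (Box2 x1 x2 y1 y2)) with (Rmax 0 (x2 - x1) * Rmax 0 (y2 - y1)) in Hsum.
    assert (lsum box2_vol l * zl
            <= (k * (Rmax 0 (x2 - x1) * Rmax 0 (y2 - y1)) + e / (zl + 1)) * zl)
      by (apply Rmult_le_compat_r; auto).
    assert (e / (zl + 1) * zl <= e).
    { apply Rmult_le_reg_r with (zl + 1); [lra|].
      replace (e / (zl + 1) * zl * (zl + 1)) with (e * zl) by (field; lra). nra. }
    nra.
Qed.

(** Every invertible linear map factors through swaps, diagonal maps and
    shears; this gives the change-of-variables bound for any box-cover outer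
    measure on which planar maps act compatibly with composition. *)
Section LinearMaps.
Variables (Bx X : Type) (vol : Bx -> R) (inb : Bx -> X -> Prop) (d0 : Bx).
Variable lift : (pt -> pt) -> X -> X.
Hypothesis vol_nn : forall b, 0 <= vol b.
Hypothesis vol_d0 : vol d0 = 0.
Hypothesis lift_comp : forall g1 g2 x, lift (fun y => g1 (g2 y)) x = lift g1 (lift g2 x).
Hypothesis lift_ext : forall g1 g2 x, (forall y, g1 y = g2 y) -> lift g1 x = lift g2 x.
Hypothesis lift_refines : forall g k, 0 <= k ->
  refines box2_vol in_box2 g k -> refines vol inb (lift g) k.

Let sc := scales vol inb.

Lemma lift_scales g k : 0 <= k -> refines box2_vol in_box2 g k -> sc (lift g) k.
Proof. intros Hk H. apply (refines_scales Bx X vol inb vol_nn d0); auto. Qed.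

Lemma lift_scales_comp g1 g2 k1 k2 : sc (lift g1) k1 -> sc (lift g2) k2 -> 0 <= k2 ->
  sc (lift (fun y => g1 (g2 y))) (k1 * k2).
Proof.
  intros H1 H2 Hk. rewrite Rmult_comm. eapply scales_ext; [apply scales_comp; eauto|].
  intros y. symmetry. apply lift_comp.
Qed.

Lemma lift_scales_eq g g' k k' : sc (lift g) k -> (forall y, g y = g' y) -> k = k' ->
  sc (lift g') k'.
Proof. intros H Hg <-. eapply scales_ext; [exact H|]. intros y. apply lift_ext, Hg. Qed.

Lemma lin_scales_nonzero a b c d : a <> 0 -> a * d - b * c <> 0 ->
  sc (lift (lin a b c d)) (/ Rabs (a * d - b * c)).
Proof.
  intros Ha Hdet. set (dt := a * d - b * c).
  assert (Hd2 : dt / a <> 0) by (unfold Rdiv; apply Rmult_integral_contrapositive; split;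
    auto; apply Rinv_neq_0_compat; auto).
  assert (Hk : 0 <= / (Rabs a * Rabs (dt / a))).
  { apply Rlt_le, Rinv_0_lt_compat, Rmult_lt_0_compat; apply Rabs_pos_lt; auto. }
  assert (Hswap : sc (lift swap) 1) by (apply lift_scales; [lra|apply swap_refines]).
  assert (Hshear : forall c', sc (lift (shear c')) 1)
    by (intro; apply lift_scales; [lra|apply shear_refines]).
  (* lin a b c d = (swap o shear (c/a) o swap) o diag a (dt/a) o shear (b/a) *)
  assert (Hlow : sc (lift (fun y => swap (shear (c / a) (swap y)))) (1 * (1 * 1))).
  { apply lift_scales_comp; [exact Hswap| |lra]. apply lift_scales_comp; auto; lra. }
  assert (Hdiag : sc (lift (diag a (dt / a))) (/ (Rabs a * Rabs (dt / a))))
    by (apply lift_scales; auto; apply diag_refines; auto).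
  assert (Hup : sc (lift (fun y => diag a (dt / a) (shear (b / a) y)))
                  (/ (Rabs a * Rabs (dt / a)) * 1))
    by (apply lift_scales_comp; [exact Hdiag|apply Hshear|lra]).
  eapply lift_scales_eq.
  - apply lift_scales_comp; [exact Hlow|exact Hup|lra].
  - intros [x y]. unfold lin, swap, shear, diag; simpl. f_equal.
    + field. auto.
    + unfold dt. field. auto.
  - rewrite <- Rabs_mult. replace (a * (dt / a)) with dt by (field; auto). ring.
Qed.

Lemma lin_scales a b c d : a * d - b * c <> 0 ->
  sc (lift (lin a b c d)) (/ Rabs (a * d - b * c)).
Proof.
  intros Hdet. destruct (Req_dec a 0) as [Ha|Ha]; [|apply lin_scales_nonzero; auto].
  subst a. assert (Hb : b <> 0) by (intro; subst; apply Hdet; ring).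
  (* lin 0 b c d = lin b 0 d c o swap *)
  assert (Hswap : sc (lift swap) 1) by (apply lift_scales; [lra|apply swap_refines]).
  eapply lift_scales_eq.
  - apply lift_scales_comp; [apply (lin_scales_nonzero b 0 d c); auto; lra|exact Hswap|lra].
  - intros [x y]. unfold lin, swap; simpl. f_equal; ring.
  - rewrite Rmult_1_r. f_equal. rewrite <- Rabs_Ropp. f_equal. ring.
Qed.

End LinearMaps.

Lemma lin_scales2 a b c d : a * d - b * c <> 0 ->
  scales box2_vol in_box2 (lin a b c d) (/ Rabs (a * d - b * c)).
Proof.
  apply (lin_scales box2 pt box2_vol in_box2 box2_0 (fun g => g)).
  - apply box2_vol_nn.
  - apply box2_0_vol.
  - reflexivity.
  - intros g1 g2 x Hg. apply Hg.
  - auto.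
Qed.

Lemma lin_scales3 a b c d : a * d - b * c <> 0 ->
  scales box3_vol in_box3 (lift3 (lin a b c d)) (/ Rabs (a * d - b * c)).
Proof.
  apply (lin_scales box3 (pt * R) box3_vol in_box3 box3_0 lift3).
  - apply box3_vol_nn.
  - apply box3_0_vol.
  - reflexivity.
  - intros g1 g2 x Hg. unfold lift3. rewrite Hg. reflexivity.
  - apply refines_lift3.
Qed.

(** Countable subadditivity of the product Lebesgue measure of
    MathComp-Analysis shows that any countable cover of an open rectangle by
    closed boxes has total volume at least the area of the rectangle. *)
Module RectangleCover.
Import all_boot all_order all_algebra all_classical all_reals all_analysis Rstruct.
Import Order.TTheory GRing.Theory Num.Theory.
Local Open Scope classical_set_scope.
Local Open Scope ring_scope.

Local Notation leb := (@lebesgue_measure R).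
Definition leb2 := product_measure1 leb leb.

Lemma leb_closed_itv (x1 x2 : R) : leb `[x1, x2] = (Rmax 0 (x2 - x1))%:E.
Proof.
  rewrite lebesgue_measure_itv /=. case: ifP => h.
  - rewrite lte_fin in h. congr EFin. move/RltP: h => h. rewrite Rmax_right //. lra.
  - rewrite Rmax_left //. move/negbT: h. rewrite lte_fin -leNgt. move/RleP. lra.
Qed.

Lemma leb_open_itv (x1 x2 : R) : Rlt x1 x2 -> leb `]x1, x2[ = (x2 - x1)%:E.
Proof.
  move=> h. rewrite lebesgue_measure_itv /= lte_fin.
  have -> : (x1 < x2)%R by apply/RltP.
  by rewrite EFinB.
Qed.

Lemma leb2_rect (A B : set (measurableTypeR R)) : measurable A -> measurable B ->
  leb2 (A `*` B) = (leb A * leb B)%E.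
Proof.
  move=> mA mB. rewrite /leb2.
  have := @product_measure1E _ _ (measurableTypeR R) (measurableTypeR R) R leb leb A B.
  by move=> ->.
Qed.

Lemma sum_f_R0_big (f : nat -> R) N : sum_f_R0 f N = \sum_(0 <= i < N.+1) f i.
Proof. elim: N => [|N IH]; first by rewrite big_nat1. by rewrite big_nat_recr //= IH. Qed.

Lemma rect_cover_area (a1 a2 b1 b2 s : R) (c : nat -> box2) :
  Rlt a1 a2 -> Rlt b1 b2 ->
  (forall x : pt, Rlt a1 (fst x) /\ Rlt (fst x) a2 -> Rlt b1 (snd x) /\ Rlt (snd x) b2 ->
     exists n, in_box2 (c n) x) ->
  (forall N, Rle (sum_f_R0 (fun n => box2_vol (c n)) N) s) ->
  Rle ((a2 - a1) * (b2 - b1)) s.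
Proof.
  move=> ha hb hcov hsum.
  pose A : set (measurableTypeR R * measurableTypeR R) := `]a1, a2[ `*` `]b1, b2[.
  pose F n : set (measurableTypeR R * measurableTypeR R) :=
    `[b2x1 (c n), b2x2 (c n)] `*` `[b2y1 (c n), b2y2 (c n)].
  have mF n : measurable (F n) by apply: measurableX; exact: measurable_itv.
  have sub : A `<=` \bigcup_n F n.
    move=> [x y] [/= hx hy]. rewrite /= in_itv /= in hx. rewrite /= in_itv /= in hy.
    case/andP: hx => /RltP hx1 /RltP hx2. case/andP: hy => /RltP hy1 /RltP hy2.
    have [n [[h1 h2] [h3 h4]]] := hcov (x, y) (conj hx1 hx2) (conj hy1 hy2).
    exists n => //. split; rewrite /= in_itv /=; apply/andP; split; exact/RleP.
  have vol_ge0 n : (0 <= box2_vol (c n))%R by apply/RleP; exact: box2_vol_nn.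
  have mA : measurable A by apply: measurableX; exact: measurable_itv.
  have EA : leb2 A = ((a2 - a1) * (b2 - b1))%:E.
    by rewrite /A leb2_rect ?leb_open_itv -?EFinM //; exact: measurable_itv.
  have EF n : leb2 (F n) = (box2_vol (c n))%:E.
    by rewrite /F leb2_rect ?leb_closed_itv -?EFinM //; exact: measurable_itv.
  have area_le : (((a2 - a1) * (b2 - b1))%:E <= \sum_(n <oo) (box2_vol (c n))%:E)%E.
    have sub_add : (leb2 A <= \sum_(n <oo) leb2 (F n))%E :=
      @measure_sigma_subadditive _ _ _ leb2 A F mF mA sub.
    rewrite -EA. apply: (le_trans sub_add).
    by apply: lee_nneseries => [n _ _|n _]; [exact: measure_ge0|rewrite EF].
  have series_le : (\sum_(n <oo) (box2_vol (c n))%:E <= s%:E)%E.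
    apply: lime_le; first by apply: is_cvg_nneseries => n _ _; rewrite lee_fin.
    apply: nearW => -[|N].
    - rewrite big_geq // lee_fin. apply: le_trans (vol_ge0 0%N) _. apply/RleP. exact: (hsum 0%N).
    - rewrite sumEFin lee_fin -sum_f_R0_big. apply/RleP. exact: hsum.
  by move: (le_trans area_le series_le); rewrite lee_fin => /RleP.
Qed.

End RectangleCover.

Lemma open_rect_cover_ge a1 a2 b1 b2 s : a1 < a2 -> b1 < b2 ->
  cover_sum2 (fun x => a1 < fst x < a2 /\ b1 < snd x < b2) s -> (a2 - a1) * (b2 - b1) <= s.
Proof.
  intros ha hb [c [Hc Hs]]. apply (RectangleCover.rect_cover_area a1 a2 b1 b2 s c ha hb).
  - intros x Hx Hy. apply Hc. auto.
  - apply (cov_partial_le box2 box2_vol box2_vol_nn c s Hs).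
Qed.

(** [lebesgue2 A] is the infimum of the cover sums of [A] whenever [A] has
    a cover; in particular it dominates every lower bound of the cover sums. *)
Lemma lebesgue2_ge A m : (exists s, cover_sum2 A s) ->
  (forall s, cover_sum2 A s -> m <= s) -> m <= lebesgue2 A.
Proof.
  intros [s0 Hs0] Hall.
  set (E := fun x => exists s, cover_sum2 A s /\ x = - s).
  destruct (completeness E) as [l [Hub Hlub]].
  { exists 0. intros x [s [Hs ->]]. specialize (cov_nonneg _ _ _ _ box2_vol_nn A s Hs). lra. }
  { exists (- s0), s0. auto. }
  assert (Hinf : exists m0, (forall s, cover_sum2 A s -> m0 <= s) /\
     (forall e, 0 < e -> exists s, cover_sum2 A s /\ s < m0 + e)).
  { exists (- l). split.
    - intros s Hs. assert (- s <= l) by (apply Hub; exists s; auto). lra.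
    - intros e He. destruct (classic (exists s, cover_sum2 A s /\ s < - l + e)) as [h|h]; auto.
      assert (l <= l - e); [|lra].
      apply Hlub. intros x [s [Hs ->]]. apply Rnot_lt_le. intro. apply h. exists s. split; auto. lra. }
  destruct (epsilon_spec (inhabits 0) _ Hinf) as [_ H2]. fold (lebesgue2 A) in H2.
  apply Rnot_lt_le. intro Hlt. destruct (H2 (m - lebesgue2 A)) as [s [Hs Hs2]]; [lra|].
  specialize (Hall s Hs). lra.
Qed.

Lemma lebesgue2_ge_lin_rect (A : pt -> Prop) a b c d r1 r2 M :
  a * d - b * c <> 0 -> 0 < r1 -> 0 < r2 ->
  (forall v, A v -> Rabs (fst v) <= M /\ Rabs (snd v) <= M) ->
  (forall u, Rabs (fst u) < r1 -> Rabs (snd u) < r2 -> A (lin a b c d u)) ->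
  Rabs (a * d - b * c) * (4 * r1 * r2) <= lebesgue2 A.
Proof.
  intros Hdet Hr1 Hr2 HM Himg.
  assert (Hk : 0 < Rabs (a * d - b * c)) by (apply Rabs_pos_lt; auto).
  apply lebesgue2_ge.
  - destruct (cov_of_list box2 pt box2_vol in_box2 box2_vol_nn box2_0 box2_0_vol A
      (Box2 (- M) M (- M) M :: nil)) as [s [Hs _]]; [|exists s; exact Hs].
    intros v Hv. exists (Box2 (- M) M (- M) M). split; [left; auto|].
    destruct (HM v Hv) as [B1 B2]. apply Rabs_le_inv in B1, B2. split; simpl; lra.
  - intros s Hs. apply Rle_plus_epsilon. intros e He.
    destruct (lin_scales2 a b c d Hdet A s (e / Rabs (a * d - b * c)) Hs) as [s' [Hs' Hb]].
    { apply Rdiv_lt_0_compat; auto. }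
    assert (Hrect : (r1 - - r1) * (r2 - - r2) <= s').
    { apply open_rect_cover_ge; try lra. eapply cov_mono; [exact Hs'|].
      intros u [Hu1 Hu2]. apply Himg; apply Rabs_def1; lra. }
    apply Rmult_le_compat_l with (r := Rabs (a * d - b * c)) in Hb; [|lra].
    replace (Rabs (a * d - b * c) * (/ Rabs (a * d - b * c) * s + e / Rabs (a * d - b * c)))
      with (s + e) in Hb by (field; lra).
    assert (Rabs (a * d - b * c) * (4 * r1 * r2) <= Rabs (a * d - b * c) * s')
      by (apply Rmult_le_compat_l; lra).
    lra.
Qed.

Ltac peq := unfold padd, pscal, popp, porig; simpl; f_equal; field.

Lemma pnorm_ge_abs u w : Rabs u <= pnorm (u, w) /\ Rabs w <= pnorm (u, w).
Proof.
  unfold pnorm; simpl. rewrite <- !sqrt_Rsqr_abs.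
  split; apply sqrt_le_1_alt; unfold Rsqr; nra.
Qed.

Lemma pnorm_le_abs u w : pnorm (u, w) <= Rabs u + Rabs w.
Proof.
  unfold pnorm; simpl. specialize (Rabs_pos u). specialize (Rabs_pos w). intros.
  rewrite <- (sqrt_Rsqr (Rabs u + Rabs w)) by lra. apply sqrt_le_1_alt. unfold Rsqr.
  assert (u * u = Rabs u * Rabs u) by (rewrite <- Rabs_mult, Rabs_right; nra).
  assert (w * w = Rabs w * Rabs w) by (rewrite <- Rabs_mult, Rabs_right; nra).
  nra.
Qed.

Lemma pdist_coord q p : Rabs (fst q - fst p) <= pdist q p /\ Rabs (snd q - snd p) <= pdist q p.
Proof.
  destruct q as [q1 q2], p as [p1 p2]. unfold pdist, padd, popp, pscal; simpl.
  replace (q1 + -1 * p1) with (q1 - p1) by ring. replace (q2 + -1 * p2) with (q2 - p2) by ring.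
  apply pnorm_ge_abs.
Qed.

Lemma pdist_le q p : pdist q p <= Rabs (fst q - fst p) + Rabs (snd q - snd p).
Proof.
  destruct q as [q1 q2], p as [p1 p2]. unfold pdist, padd, popp, pscal; simpl.
  replace (q1 + -1 * p1) with (q1 - p1) by ring. replace (q2 + -1 * p2) with (q2 - p2) by ring.
  apply pnorm_le_abs.
Qed.

Lemma small_shift v r : 0 < r -> exists dl, 0 < dl /\
  forall a s, Rabs s <= dl -> pdist (padd a (pscal s v)) a < r.
Proof.
  intros Hr. set (k := Rabs (fst v) + Rabs (snd v) + 1).
  assert (Hk : 0 < k) by (unfold k; specialize (Rabs_pos (fst v)); specialize (Rabs_pos (snd v)); lra).
  exists (r / (2 * k)). split; [apply Rdiv_lt_0_compat; lra|].
  intros a s Hs. eapply Rle_lt_trans; [apply pdist_le|].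
  destruct a as [a1 a2], v as [v1 v2]. unfold padd, pscal, k in *; simpl in *.
  replace (a1 + s * v1 - a1) with (s * v1) by ring. replace (a2 + s * v2 - a2) with (s * v2) by ring.
  rewrite !Rabs_mult. specialize (Rabs_pos s). specialize (Rabs_pos v1). specialize (Rabs_pos v2).
  intros. apply Rmult_le_compat_r with (r := Rabs v1 + Rabs v2 + 1) in Hs; [|lra].
  replace (r / (2 * (Rabs v1 + Rabs v2 + 1)) * (Rabs v1 + Rabs v2 + 1)) with (r / 2) in Hs
    by (field; lra).
  nra.
Qed.

Lemma closure_bounded K : is_bounded K -> exists M, 0 <= M /\
  forall y, closure K y -> Rabs (fst y) <= M /\ Rabs (snd y) <= M.
Proof.
  intros [M HM]. exists (Rmax 0 M). split; [apply Rmax_l|].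
  intros [y1 y2] Hy.
  assert (Hcoord : forall u, (forall e, 0 < e -> exists q, K q /\ Rabs (u q - u (y1, y2)) < e) ->
    (forall q, Rabs (u q) <= pnorm q) -> Rabs (u (y1, y2)) <= Rmax 0 M).
  { intros u Hu Hn. apply Rnot_lt_le. intro Hlt.
    destruct (Hu (Rabs (u (y1, y2)) - M)) as [q [Hq Hd]]; [specialize (Rmax_r 0 M); lra|].
    specialize (HM q Hq). specialize (Hn q). specialize (Rmax_r 0 M). intros.
    assert (Rabs (u (y1, y2)) <= Rabs (u q) + Rabs (u q - u (y1, y2)))
      by (unfold Rabs; repeat destruct Rcase_abs; lra). lra. }
  assert (Happrox : forall e, 0 < e -> exists q, K q /\
    Rabs (fst q - y1) < e /\ Rabs (snd q - y2) < e).
  { intros e He. destruct (Hy e He) as [q [Hq Hd]]. destruct (pdist_coord q (y1, y2)).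
    exists q. simpl in *. repeat split; auto; lra. }
  split; [apply (Hcoord fst)|apply (Hcoord snd)];
    try (intros [a b]; apply pnorm_ge_abs);
    intros e He; destruct (Happrox e He) as [q [Hq [H1 H2]]]; exists q; auto.
Qed.

(** * Open convex sets: boundary, chords, Hilbert distance, Finsler balls *)
Section OpenConvex.
Variable K : pt -> Prop.
Hypothesis Kopen : is_open K.
Hypothesis Kconv : is_convex K.

Lemma closure_interior_comb y c t : closure K y -> K c -> 0 < t <= 1 ->
  K (padd (pscal (1 - t) y) (pscal t c)).
Proof.
  intros Hy Hc Ht.
  destruct (Req_dec t 1) as [->|Ht1].
  { replace (padd (pscal (1 - 1) y) (pscal 1 c)) with c by (destruct y, c; peq). auto. }
  destruct (Kopen c Hc) as [r [Hr Hball]].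
  set (kk := (1 - t) / t).
  assert (Hkk : 0 < kk) by (unfold kk; apply Rdiv_lt_0_compat; lra).
  set (dl := r * t / (4 * (1 - t))).
  assert (Hdl : 0 < dl) by (unfold dl; apply Rdiv_lt_0_compat; nra).
  (* approximate y by q in K and move c by kk (y - q), which keeps it in K *)
  destruct (Hy dl Hdl) as [q [Hq Hqy]].
  destruct (pdist_coord q y) as [h1 h2].
  destruct y as [y1 y2], q as [q1 q2], c as [c1 c2]. simpl in h1, h2.
  set (c' := (c1 + kk * (y1 - q1), c2 + kk * (y2 - q2))).
  assert (Hc' : K c').
  { apply Hball. eapply Rle_lt_trans; [apply pdist_le|]. unfold c'; simpl.
    replace (c1 + kk * (y1 - q1) - c1) with (kk * (y1 - q1)) by ring.
    replace (c2 + kk * (y2 - q2) - c2) with (kk * (y2 - q2)) by ring.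
    rewrite !Rabs_mult, (Rabs_right kk), (Rabs_minus_sym y1), (Rabs_minus_sym y2) by lra.
    assert (kk * dl = r / 4) by (unfold kk, dl; field; lra).
    nra. }
  replace (padd (pscal (1 - t) (y1, y2)) (pscal t (c1, c2)))
    with (padd (pscal (1 - t) (q1, q2)) (pscal t c')) by (unfold c', kk; peq; lra).
  apply Kconv; auto. lra.
Qed.

Lemma boundary_ne_origin u : K porig -> boundary K u -> u <> porig.
Proof. intros H0 [_ Hu] E. subst. auto. Qed.

Lemma ray_meets_boundary_once u w l : K porig -> boundary K u -> boundary K w ->
  u = pscal l w -> 0 < l -> l = 1.
Proof.
  intros H0 Hu Hw E Hl.
  destruct (Rtotal_order l 1) as [h|[h|h]]; auto; exfalso.
  - apply (proj2 Hu). replace u with (padd (pscal (1 - (1 - l)) w) (pscal (1 - l) porig))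
      by (subst; destruct w; peq).
    apply closure_interior_comb; auto; [apply Hw|lra].
  - assert (0 < / l < 1).
    { split; [apply Rinv_0_lt_compat; lra|]. rewrite <- Rinv_1.
      apply Rinv_1_lt_contravar; lra. }
    apply (proj2 Hw). replace w with (padd (pscal (1 - (1 - / l)) u) (pscal (1 - / l) porig))
      by (subst; destruct w; peq; lra).
    apply closure_interior_comb; auto; [apply Hu|lra].
Qed.

Lemma chord_through_origin a b z s t X : K porig ->
  boundary K a -> boundary K b -> boundary K z -> boundary K (popp z) ->
  0 < s -> s < t -> t < 1 -> 0 < X ->
  porig = padd (pscal (1 - s) a) (pscal s b) ->
  pscal X z = padd (pscal (1 - t) a) (pscal t b) ->
  s = / 2 /\ t = (1 + X) / 2.
Proof.
  intros H0 Ha Hb Hz Hmz Hs Hst Ht1 HX Ea Eb.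
  set (mu := (t - s) / (1 - s)).
  assert (Hmu : 0 < mu) by (unfold mu; apply Rdiv_lt_0_compat; lra).
  destruct a as [a1 a2], b as [b1 b2], z as [z1 z2].
  unfold porig, padd, pscal in Ea, Eb. simpl in Ea, Eb.
  injection Ea as Ea1 Ea2. injection Eb as Eb1 Eb2.
  assert (Ha1 : a1 = - (s / (1 - s)) * b1).
  { apply Rmult_eq_reg_l with (1 - s); [|lra].
    replace ((1 - s) * (- (s / (1 - s)) * b1)) with (- s * b1) by (field; lra). lra. }
  assert (Ha2 : a2 = - (s / (1 - s)) * b2).
  { apply Rmult_eq_reg_l with (1 - s); [|lra].
    replace ((1 - s) * (- (s / (1 - s)) * b2)) with (- s * b2) by (field; lra). lra. }
  assert (Eb1' : X * z1 = mu * b1) by (rewrite Eb1, Ha1; unfold mu; field; lra).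
  assert (Eb2' : X * z2 = mu * b2) by (rewrite Eb2, Ha2; unfold mu; field; lra).
  assert (HmuX : X / mu = 1).
  { apply (ray_meets_boundary_once (b1, b2) (z1, z2)); auto.
    - unfold pscal; simpl. f_equal; apply Rmult_eq_reg_l with mu; try lra.
      + rewrite <- Eb1'. field. lra.
      + rewrite <- Eb2'. field. lra.
    - apply Rdiv_lt_0_compat; lra. }
  assert (Hmu_eq : mu = X) by (apply Rdiv_diag_uniq in HmuX; auto).
  assert (Hbz1 : b1 = z1) by (apply Rmult_eq_reg_l with X; [rewrite Eb1', Hmu_eq|]; lra).
  assert (Hbz2 : b2 = z2) by (apply Rmult_eq_reg_l with X; [rewrite Eb2', Hmu_eq|]; lra).
  assert (Hs2 : s / (1 - s) = 1).
  { apply (ray_meets_boundary_once (a1, a2) (popp (z1, z2))); auto.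
    - unfold popp, pscal; simpl. f_equal; [rewrite Ha1, Hbz1|rewrite Ha2, Hbz2]; ring.
    - apply Rdiv_lt_0_compat; lra. }
  apply Rdiv_diag_uniq in Hs2.
  assert (Hsh : s = / 2) by lra. split; auto.
  unfold mu in Hmu_eq. rewrite Hsh in Hmu_eq.
  replace ((t - / 2) / (1 - / 2)) with (2 * t - 1) in Hmu_eq by field. lra.
Qed.

Lemma hilbert_dist_symmetric_chord z X : K porig -> boundary K z -> boundary K (popp z) ->
  0 < X < 1 ->
  forall d, hilbert_dist K porig (pscal X z) d <-> d = / 2 * ln ((1 + X) / (1 - X)).
Proof.
  intros H0 Hz Hmz HX d.
  assert (HXz : porig <> pscal X z).
  { intro E. apply (boundary_ne_origin z H0 Hz). destruct z as [z1 z2].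
    unfold pscal, porig in E. injection E as E1 E2.
    symmetry in E1, E2. apply Rmult_integral in E1, E2.
    destruct E1, E2; try lra. subst; auto. }
  split.
  - intros [[E _]|[_ [a [b [s [t [Ha [Hb [Hs [Hst [Ht1 [Ea [Eb Ed]]]]]]]]]]]]];
      [contradiction|].
    destruct (chord_through_origin a b z s t X) as [-> ->]; auto; try lra.
    rewrite Ed. do 2 f_equal. field. lra.
  - intros ->. right. split; auto.
    exists (popp z), z, (/ 2), ((1 + X) / 2).
    refine (conj Hmz (conj Hz (conj _ (conj _ (conj _ (conj _ (conj _ _))))))); try lra.
    + destruct z; unfold popp; peq.
    + destruct z; unfold popp; peq.
    + do 2 f_equal. field. lra.
Qed.

End OpenConvex.

Lemma ray_params_bounded K p v : is_bounded K -> v <> porig ->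
  exists B, forall t, 0 <= t -> K (padd p (pscal t v)) -> t <= B.
Proof.
  intros [M HM] Hv. destruct p as [p1 p2], v as [v1 v2].
  assert (Hpos : 0 < Rabs v1 + Rabs v2).
  { destruct (Req_dec v1 0) as [->|h1]; [destruct (Req_dec v2 0) as [->|h2]|].
    - exfalso. apply Hv. reflexivity.
    - specialize (Rabs_pos_lt v2 h2). rewrite Rabs_R0. lra.
    - specialize (Rabs_pos_lt v1 h1). specialize (Rabs_pos v2). lra. }
  exists ((2 * M + Rabs p1 + Rabs p2) / (Rabs v1 + Rabs v2)). intros t Ht Hk.
  apply HM in Hk. unfold padd, pscal in Hk; simpl in Hk.
  destruct (pnorm_ge_abs (p1 + t * v1) (p2 + t * v2)) as [B1 B2].
  assert (t * Rabs v1 <= M + Rabs p1).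
  { rewrite <- (Rabs_right t), <- Rabs_mult by lra.
    replace (t * v1) with ((p1 + t * v1) - p1) by ring.
    eapply Rle_trans; [apply Rabs_triang|]. rewrite Rabs_Ropp. lra. }
  assert (t * Rabs v2 <= M + Rabs p2).
  { rewrite <- (Rabs_right t), <- Rabs_mult by lra.
    replace (t * v2) with ((p2 + t * v2) - p2) by ring.
    eapply Rle_trans; [apply Rabs_triang|]. rewrite Rabs_Ropp. lra. }
  apply Rmult_le_reg_r with (Rabs v1 + Rabs v2); auto.
  replace ((2 * M + Rabs p1 + Rabs p2) / (Rabs v1 + Rabs v2) * (Rabs v1 + Rabs v2))
    with (2 * M + Rabs p1 + Rabs p2) by (field; lra).
  lra.
Qed.

(** Every ray from an interior point of a bounded open set meets its
    boundary: at the supremum of the parameters that stay inside. *)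
Lemma ray_boundary K p v : is_open K -> is_bounded K -> K p -> v <> porig ->
  exists t, 0 < t /\ boundary K (padd p (pscal t v)).
Proof.
  intros Kopen Kbd Kp Hv.
  set (E := fun t => 0 <= t /\ K (padd p (pscal t v))).
  assert (HE0 : E 0) by (split; [lra|replace (padd p (pscal 0 v)) with p by (destruct p, v; peq); auto]).
  destruct (ray_params_bounded K p v Kbd Hv) as [B HB].
  destruct (completeness E) as [m [Hub Hlub]].
  { exists B. intros t [Ht Hk]. auto. }
  { exists 0. exact HE0. }
  assert (Hm0 : 0 <= m) by (apply Hub, HE0).
  assert (Hshift : forall s, padd p (pscal s v) = padd (padd p (pscal m v)) (pscal (s - m) v))
    by (intros; destruct p, v; peq).
  assert (Hstay : forall a, K a -> exists dl, 0 < dl /\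
            forall s, Rabs s <= dl -> K (padd a (pscal s v))).
  { intros a Ha. destruct (Kopen a Ha) as [r [Hr Hball]].
    destruct (small_shift v r Hr) as [dl [Hdl Hs]]. exists dl. split; auto. }
  exists m. split; [|split].
  - destruct (Hstay p Kp) as [dl [Hdl Hs]].
    assert (E dl) by (split; [lra|apply Hs; rewrite Rabs_right; lra]).
    specialize (Hub dl H). lra.
  - intros e He. destruct (small_shift v e He) as [dl [Hdl Hs]].
    destruct (classic (exists t, E t /\ m - dl < t)) as [[t [[Ht0 Kt] Ht]]|hno].
    + exists (padd p (pscal t v)). split; auto. rewrite Hshift. apply Hs.
      assert (t <= m) by (apply Hub; split; auto). rewrite Rabs_left1; lra.
    + assert (m <= m - dl); [|lra]. apply Hlub. intros t Et.
      apply Rnot_lt_le. intro. apply hno. exists t. split; [exact Et|lra].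
  - intro Hk. destruct (Hstay _ Hk) as [dl [Hdl Hs]].
    assert (E (m + dl)).
    { split; [lra|]. rewrite Hshift. apply Hs.
      replace (m + dl - m) with dl by ring. rewrite Rabs_right; lra. }
    specialize (Hub _ H). lra.
Qed.

(** If [p + v] and [p - v] lie in [K], then [v] lies in the Finsler unit
    ball at [p]: both boundary parameters exceed [1]. *)
Lemma finsler_ball_of_symmetric K p v : is_open K -> is_bounded K -> is_convex K ->
  K p -> K (padd p v) -> K (padd p (popp v)) -> finsler_ball K p v.
Proof.
  intros Kopen Kbdd Kconv Kp Kpv Kmv.
  destruct (classic (v = porig)) as [Hv|Hv]; [exists 0; split; [left; auto|lra]|].
  assert (Hv' : popp v <> porig).
  { intro E. apply Hv. destruct v; unfold popp, pscal, porig in *; simpl in *.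
    injection E as E1 E2. f_equal; lra. }
  destruct (ray_boundary K p v Kopen Kbdd Kp Hv) as [tp [Htp Btp]].
  destruct (ray_boundary K p (popp v) Kopen Kbdd Kp Hv') as [tm [Htm Btm]].
  replace (padd p (pscal tm (popp v))) with (padd p (pscal (- tm) v)) in Btm
    by (destruct p, v; unfold popp; peq).
  assert (Htp1 : 1 < tp).
  { apply Rnot_le_lt. intro h. apply (proj2 Btp).
    replace (padd p (pscal tp v)) with (padd (pscal (1 - tp) p) (pscal tp (padd p v)))
      by (destruct p, v; peq).
    apply Kconv; auto; lra. }
  assert (Htm1 : 1 < tm).
  { apply Rnot_le_lt. intro h. apply (proj2 Btm).
    replace (padd p (pscal (- tm) v)) with (padd (pscal (1 - tm) p) (pscal tm (padd p (popp v))))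
      by (destruct p, v; unfold popp; peq).
    apply Kconv; auto; lra. }
  exists (/ 2 * (/ tm + / tp)). split.
  - right. split; auto. exists tm, tp. repeat split; auto; try apply Btm; try apply Btp.
  - assert (/ tm < 1) by (rewrite <- Rinv_1; apply Rinv_1_lt_contravar; lra).
    assert (/ tp < 1) by (rewrite <- Rinv_1; apply Rinv_1_lt_contravar; lra). lra.
Qed.

(** Finsler unit vectors are bounded by the size of the closure: the two
    boundary points [p - tm v] and [p + tp v] are [tm + tp > 2] times [v]
    apart. *)
Lemma finsler_ball_bounded K M p v : 0 <= M ->
  (forall y, closure K y -> Rabs (fst y) <= M /\ Rabs (snd y) <= M) ->
  finsler_ball K p v -> Rabs (fst v) <= M /\ Rabs (snd v) <= M.
Proof.
  intros HM0 HM [f [[[Hv Hf]|[Hv [tm [tp [Htm [Htp [Bm [Bp Hf]]]]]]]] Hf1]].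
  - subst. unfold porig; simpl. rewrite Rabs_R0. lra.
  - assert (Hsum : 2 < tm + tp).
    { assert (E : (tm + tp) * (/ tm + / tp) = 4 + (tm - tp) ^ 2 / (tm * tp)) by (field; lra).
      assert (0 <= (tm - tp) ^ 2 / (tm * tp))
        by (apply Rle_mult_inv_pos; [apply pow2_ge_0|apply Rmult_lt_0_compat; lra]).
      assert (0 < / tm) by (apply Rinv_0_lt_compat; lra).
      assert (0 < / tp) by (apply Rinv_0_lt_compat; lra).
      subst f. nra. }
    destruct (HM _ (proj1 Bm)) as [Bm1 Bm2]. destruct (HM _ (proj1 Bp)) as [Bp1 Bp2].
    destruct p as [a b], v as [v1 v2]. unfold padd, pscal in *; simpl in *.
    assert (E1 : (tm + tp) * Rabs v1 <= 2 * M).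
    { rewrite <- (Rabs_right (tm + tp)), <- Rabs_mult by lra.
      replace ((tm + tp) * v1) with ((a + tp * v1) - (a + - tm * v1)) by ring.
      unfold Rabs in *; repeat destruct Rcase_abs; lra. }
    assert (E2 : (tm + tp) * Rabs v2 <= 2 * M).
    { rewrite <- (Rabs_right (tm + tp)), <- Rabs_mult by lra.
      replace ((tm + tp) * v2) with ((b + tp * v2) - (b + - tm * v2)) by ring.
      unfold Rabs in *; repeat destruct Rcase_abs; lra. }
    specialize (Rabs_pos v1). specialize (Rabs_pos v2). intros. split; nra.
Qed.

(** * Coordinates adapted to [P] and [Q] *)

Definition det2 (P Q : pt) : R := fst P * snd Q - snd P * fst Q.

Lemma det2_zero_proportional P Q : det2 P Q = 0 -> P <> porig -> exists l, Q = pscal l P.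
Proof.
  destruct P as [p1 p2], Q as [q1 q2]. unfold det2, pscal, porig; simpl. intros HD HP.
  destruct (Req_dec p1 0) as [h1|h1].
  - assert (h2 : p2 <> 0) by (intro; subst; auto).
    subst p1. exists (q2 / p2). f_equal.
    + assert (p2 * q1 = 0) by lra. apply Rmult_integral in H as [H|H]; [contradiction|].
      subst. ring.
    + field. auto.
  - exists (q1 / p1). f_equal.
    + field. auto.
    + apply Rmult_eq_reg_l with p1; auto.
      replace (p1 * (q1 / p1 * p2)) with (p2 * q1) by (field; auto). lra.
Qed.

(** Two distinct points whose segment lies on the boundary of an open convex
    set containing [0] are linearly independent: otherwise either they lie
    on one ray from [0], which meets the boundary once, or [0] lies on the
    segment. *)
Lemma boundary_segment_independent K P Q : is_open K -> is_convex K -> K porig -> P <> Q ->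
  (forall x, segment P Q x -> boundary K x) -> det2 P Q <> 0.
Proof.
  intros Kopen Kconv K0 hPQ hseg HD.
  assert (segP : segment P Q P) by (exists 0; split; [lra|destruct P, Q; peq]).
  assert (segQ : segment P Q Q) by (exists 1; split; [lra|destruct P, Q; peq]).
  assert (HP0 : P <> porig) by (intro E; apply (proj2 (hseg P segP)); rewrite E; auto).
  destruct (det2_zero_proportional P Q HD HP0) as [l Hl].
  destruct (Rlt_dec 0 l) as [hl|hl].
  - assert (l = 1) by (apply (ray_meets_boundary_once K Kopen Kconv Q P l); auto).
    apply hPQ. rewrite Hl, H. destruct P; peq.
  - assert (segment P Q porig).
    { exists (/ (1 - l)). split.
      - split; [apply Rlt_le, Rinv_0_lt_compat; lra|].
        rewrite <- Rinv_1. apply Rinv_le_contravar; lra.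
      - rewrite Hl. destruct P; peq; lra. }
    apply (proj2 (hseg _ H)). auto.
Qed.

(** When [P] and [Q] are independent, [Xc] and [Yc] are the coordinates in
    which [P = (1, -1)] and [Q = (1, 1)]; [coord_inv] is the inverse map. *)
Section AdaptedCoordinates.
Variables P Q : pt.
Hypothesis hD : det2 P Q <> 0.

Local Notation p1 := (fst P).
Local Notation p2 := (snd P).
Local Notation q1 := (fst Q).
Local Notation q2 := (snd Q).
Local Notation D := (det2 P Q).

Definition coord_map : pt -> pt :=
  lin ((q2 - p2) / D) ((p1 - q1) / D) ((- p2 - q2) / D) ((p1 + q1) / D).
Definition coord_inv : pt -> pt :=
  lin ((p1 + q1) / 2) ((q1 - p1) / 2) ((p2 + q2) / 2) ((q2 - p2) / 2).
Definition Xc (x : pt) : R := fst (coord_map x).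
Definition Yc (x : pt) : R := snd (coord_map x).

Lemma coord_map_eq x : coord_map x = (Xc x, Yc x).
Proof. unfold Xc, Yc. destruct (coord_map x); reflexivity. Qed.

Lemma coord_map_det :
  (q2 - p2) / D * ((p1 + q1) / D) - (p1 - q1) / D * ((- p2 - q2) / D) = 2 / D.
Proof. unfold det2. field. exact hD. Qed.

Lemma coord_inv_det :
  (p1 + q1) / 2 * ((q2 - p2) / 2) - (q1 - p1) / 2 * ((p2 + q2) / 2) = D / 2.
Proof. unfold det2. field. Qed.

Ltac crd := unfold Xc, Yc, coord_map, coord_inv, lin, padd, pscal, popp, porig;
  simpl; unfold det2 in *; field; exact hD.

Lemma Xc_add a b : Xc (padd a b) = Xc a + Xc b. Proof. crd. Qed.
Lemma Yc_add a b : Yc (padd a b) = Yc a + Yc b. Proof. crd. Qed.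
Lemma Xc_scal k a : Xc (pscal k a) = k * Xc a. Proof. crd. Qed.
Lemma Yc_scal k a : Yc (pscal k a) = k * Yc a. Proof. crd. Qed.
Lemma Xc_opp a : Xc (popp a) = - Xc a. Proof. crd. Qed.
Lemma Yc_opp a : Yc (popp a) = - Yc a. Proof. crd. Qed.
Lemma Xc_P : Xc P = 1. Proof. crd. Qed.
Lemma Yc_P : Yc P = -1. Proof. crd. Qed.
Lemma Xc_Q : Xc Q = 1. Proof. crd. Qed.
Lemma Yc_Q : Yc Q = 1. Proof. crd. Qed.
Lemma Xc_0 : Xc porig = 0. Proof. crd. Qed.
Lemma Yc_0 : Yc porig = 0. Proof. crd. Qed.
Lemma Xc_inv r : Xc (coord_inv r) = fst r. Proof. crd. Qed.
Lemma Yc_inv r : Yc (coord_inv r) = snd r. Proof. crd. Qed.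

Lemma coord_inv_map x : coord_inv (Xc x, Yc x) = x.
Proof. destruct x as [x1 x2]. unfold Xc, Yc, coord_map, coord_inv, lin; simpl. f_equal; crd. Qed.

Lemma coords_inj x y : Xc x = Xc y -> Yc x = Yc y -> x = y.
Proof. intros H1 H2. rewrite <- (coord_inv_map x), <- (coord_inv_map y), H1, H2. auto. Qed.

End AdaptedCoordinates.

Ltac coords hD := repeat progress rewrite ?Xc_add, ?Yc_add, ?Xc_scal, ?Yc_scal, ?Xc_opp,
  ?Yc_opp, ?Xc_P, ?Yc_P, ?Xc_Q, ?Yc_Q, ?Xc_0, ?Yc_0, ?Xc_inv, ?Yc_inv by exact hD.

Section Parallelogram.
Variables P Q : pt.
Hypothesis hD : det2 P Q <> 0.

Local Notation X := (Xc P Q).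
Local Notation Y := (Yc P Q).
Local Notation T := (open_hull4 P Q (popp P) (popp Q)).

Lemma T_char x : T x <-> Rabs (X x) < 1 /\ Rabs (Y x) < 1.
Proof.
  split.
  - intros [l1 [l2 [l3 [l4 [H1 [H2 [H3 [H4 [Hs ->]]]]]]]]]. coords hD.
    split; apply Rabs_def1; lra.
  - intros [hX hY]. apply Rabs_def2 in hX, hY.
    (* a positive combination with X = l1 + l2 - l3 - l4, Y = l2 + l3 - l1 - l4 *)
    set (m := (Rmax 0 ((X x - Y x) / 2) + Rmin ((1 + X x) / 2) ((1 - Y x) / 2)) / 2).
    assert (Hm : 0 < m /\ (X x - Y x) / 2 < m /\ m < (1 + X x) / 2 /\ m < (1 - Y x) / 2).
    { unfold m, Rmax, Rmin. do 2 destruct Rle_dec; lra. }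
    exists m, ((1 + X x) / 2 - m), ((Y x - X x) / 2 + m), ((1 - Y x) / 2 - m).
    repeat split; try lra.
    apply (coords_inj P Q hD); coords hD; field.
Qed.

Lemma coords_lipschitz : exists k, 0 < k /\
  forall u, Rabs (X u) <= k * pnorm u /\ Rabs (Y u) <= k * pnorm u.
Proof.
  set (a := (snd Q - snd P) / det2 P Q). set (b := (fst P - fst Q) / det2 P Q).
  set (c := (- snd P - snd Q) / det2 P Q). set (d := (fst P + fst Q) / det2 P Q).
  exists (Rabs a + Rabs b + Rabs c + Rabs d + 1).
  specialize (Rabs_pos a). specialize (Rabs_pos b). specialize (Rabs_pos c).
  specialize (Rabs_pos d). intros. split; [lra|]. intros [u1 u2].
  destruct (pnorm_ge_abs u1 u2) as [B1 B2].
  assert (0 <= pnorm (u1, u2)) by apply sqrt_pos.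
  replace (X (u1, u2)) with (u1 * a + u2 * b) by (unfold Xc, coord_map, lin; simpl; fold a b; ring).
  replace (Y (u1, u2)) with (u1 * c + u2 * d) by (unfold Yc, coord_map, lin; simpl; fold c d; ring).
  split; eapply Rle_trans; try apply Rabs_triang; rewrite !Rabs_mult; nra.
Qed.

Lemma T_open : is_open T.
Proof.
  intros x Hx. apply T_char in Hx. destruct Hx as [hX hY].
  destruct coords_lipschitz as [k [Hk Hlip]].
  set (r := Rmin (1 - Rabs (X x)) (1 - Rabs (Y x))).
  assert (Hr : 0 < r) by (unfold r, Rmin; destruct Rle_dec; lra).
  assert (Hr1 : r <= 1 - Rabs (X x)) by apply Rmin_l.
  assert (Hr2 : r <= 1 - Rabs (Y x)) by apply Rmin_r.
  exists (r / k). split; [apply Rdiv_lt_0_compat; lra|]. intros q Hq. apply T_char.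
  replace q with (padd x (padd q (popp x))) by (destruct q, x; peq).
  destruct (Hlip (padd q (popp x))) as [B1 B2]. fold (pdist q x) in B1, B2.
  assert (k * pdist q x < r).
  { apply Rmult_lt_compat_l with (r := k) in Hq; auto.
    replace (k * (r / k)) with r in Hq by (field; lra). exact Hq. }
  rewrite Xc_add, Yc_add by exact hD. split; eapply Rle_lt_trans; try apply Rabs_triang; lra.
Qed.

Lemma T_conv : is_convex T.
Proof.
  intros a b t Ha Hb Ht. apply T_char in Ha, Hb. apply T_char. coords hD.
  destruct Ha as [a1 a2], Hb as [b1 b2].
  split; eapply Rle_lt_trans; try apply Rabs_triang;
    rewrite !Rabs_mult, (Rabs_right t), (Rabs_right (1 - t)) by lra;
    destruct (Req_dec t 0); try (subst; lra); nra.
Qed.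

Lemma T_origin : T porig.
Proof. apply T_char. coords hD. rewrite Rabs_R0. lra. Qed.

Lemma side_PQ z : X z = 1 -> Rabs (Y z) <= 1 -> segment P Q z.
Proof.
  intros H1 H2. apply Rabs_le_inv in H2. exists ((1 + Y z) / 2). split; [lra|].
  apply (coords_inj P Q hD); coords hD; rewrite ?H1; field.
Qed.

Lemma side_mPmQ z : X z = -1 -> Rabs (Y z) <= 1 -> segment (popp P) (popp Q) z.
Proof.
  intros H1 H2. apply Rabs_le_inv in H2. exists ((1 - Y z) / 2). split; [lra|].
  apply (coords_inj P Q hD); coords hD; rewrite ?H1; field.
Qed.

Lemma T_boundary z : Rabs (X z) = 1 -> Rabs (Y z) < 1 -> boundary T z.
Proof.
  intros H1 H2. split.
  - intros e He. destruct (small_shift z e He) as [dl [Hdl Hs]].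
    set (s := Rmin dl (1 / 2)).
    assert (Hs0 : 0 < s <= dl /\ s <= 1 / 2) by (unfold s, Rmin; destruct Rle_dec; lra).
    exists (padd z (pscal (- s) z)). split.
    + apply T_char. coords hD.
      replace (X z + - s * X z) with ((1 - s) * X z) by ring.
      replace (Y z + - s * Y z) with ((1 - s) * Y z) by ring.
      rewrite !Rabs_mult, (Rabs_right (1 - s)), H1 by lra.
      specialize (Rabs_pos (Y z)). intros. split; nra.
    + apply Hs. rewrite Rabs_Ropp, Rabs_right; lra.
  - intro HT. apply T_char in HT. lra.
Qed.

Lemma triangle_coords x : open_hull3 P porig Q x -> 0 < X x < 1 /\ Rabs (Y x) < X x.
Proof.
  intros [l1 [l2 [l3 [H1 [H2 [H3 [Hs ->]]]]]]]. coords hD.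
  split; [lra|]. apply Rabs_def1; lra.
Qed.

Lemma triangle_in_T x : open_hull3 P porig Q x -> T x.
Proof.
  intros Hx. destruct (triangle_coords x Hx) as [HX HY]. apply T_char.
  apply Rabs_def2 in HY. split; apply Rabs_def1; lra.
Qed.

Lemma triangle_ray x : open_hull3 P porig Q x ->
  x = pscal (X x) (pscal (/ X x) x) /\
  X (pscal (/ X x) x) = 1 /\ Rabs (Y (pscal (/ X x) x)) < 1.
Proof.
  intros Hx. destruct (triangle_coords x Hx) as [HX HY].
  split; [destruct x; peq; lra|]. coords hD. split; [field; lra|].
  rewrite Rabs_mult, Rabs_right by (apply Rle_ge, Rlt_le, Rinv_0_lt_compat; lra).
  apply Rmult_lt_reg_l with (X x); [lra|].
  rewrite <- Rmult_assoc, Rinv_r by lra. lra.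
Qed.

Lemma hilbert_ball_triangle K x Rad : is_open K -> is_convex K -> K porig -> K x ->
  open_hull3 P porig Q x ->
  (forall z, X z = 1 -> Rabs (Y z) < 1 -> boundary K z /\ boundary K (popp z)) ->
  (hilbert_ball K Rad x <-> / 2 * ln ((1 + X x) / (1 - X x)) < Rad).
Proof.
  intros Ko Kc K0 Kx Hx Hb.
  destruct (triangle_ray x Hx) as [Ex [Hz1 Hz2]].
  destruct (Hb _ Hz1 Hz2) as [Bz Bmz].
  destruct (triangle_coords x Hx) as [HX _].
  assert (F := hilbert_dist_symmetric_chord K Ko Kc _ (X x) K0 Bz Bmz HX).
  rewrite <- Ex in F. split.
  - intros [_ [d [Hd Hdr]]]. apply F in Hd. lra.
  - intros H. split; auto. exists (/ 2 * ln ((1 + X x) / (1 - X x))). split; auto.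
    apply F. auto.
Qed.

End Parallelogram.

(** * Estimates for the measure of Hilbert balls in the triangle *)

(** [rad_tanh Rad = tanh Rad] bounds the coordinate [X] on the Hilbert ball
    of radius [Rad]; the length [-ln (1 - tanh Rad)] of the corresponding
    range of the density integral is below [2 Rad]. *)
Definition rad_tanh (Rad : R) : R := (exp (2 * Rad) - 1) / (exp (2 * Rad) + 1).

Lemma rad_tanh_bounds Rad : 0 < Rad -> 0 < rad_tanh Rad < 1 /\ - ln (1 - rad_tanh Rad) < 2 * Rad.
Proof.
  intros HR. unfold rad_tanh. set (E := exp (2 * Rad)).
  assert (HE : 1 < E) by (unfold E; rewrite <- exp_0; apply exp_increasing; lra).
  replace (1 - (E - 1) / (E + 1)) with (2 / (E + 1)) by (field; lra).
  split; [split|].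
  - apply Rdiv_lt_0_compat; lra.
  - apply Rmult_lt_reg_r with (E + 1); [lra|].
    replace ((E - 1) / (E + 1) * (E + 1)) with (E - 1) by (field; lra). lra.
  - assert (ln (/ E) < ln (2 / (E + 1))).
    { apply ln_increasing; [apply Rinv_0_lt_compat; lra|].
      apply Rmult_lt_reg_r with (E * (E + 1)); [nra|].
      replace (/ E * (E * (E + 1))) with (E + 1) by (field; lra).
      replace (2 / (E + 1) * (E * (E + 1))) with (2 * E) by (field; lra). lra. }
    assert (ln E = 2 * Rad) by (unfold E; apply ln_exp).
    rewrite ln_Rinv in H by lra. lra.
Qed.

Lemma lt_rad_tanh X Rad : 0 < X < 1 -> / 2 * ln ((1 + X) / (1 - X)) < Rad -> X < rad_tanh Rad.
Proof.
  intros HX H. unfold rad_tanh.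
  assert (Hp : 0 < (1 + X) / (1 - X)) by (apply Rdiv_lt_0_compat; lra).
  assert (H2 : (1 + X) / (1 - X) < exp (2 * Rad))
    by (rewrite <- (exp_ln _ Hp); apply exp_increasing; lra).
  assert (HE : 0 < exp (2 * Rad)) by apply exp_pos.
  assert (H3 : 1 + X < exp (2 * Rad) * (1 - X)).
  { replace (1 + X) with ((1 + X) / (1 - X) * (1 - X)) by (field; lra).
    apply Rmult_lt_compat_r; lra. }
  apply Rmult_lt_reg_r with (exp (2 * Rad) + 1); [lra|].
  replace ((exp (2 * Rad) - 1) / (exp (2 * Rad) + 1) * (exp (2 * Rad) + 1))
    with (exp (2 * Rad) - 1) by (field; lra).
  nra.
Qed.

(** [h/a <= ln a - ln (a - h)]: the integral of [1/x] over [[a - h, a]]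
    dominates its lower Riemann rectangle. *)
Lemma riemann_step_ln a h : 0 < h -> h < a -> h / a <= ln a - ln (a - h).
Proof.
  intros Hh Ha.
  assert (E : ln (a - h) - ln a = ln ((a - h) / a)).
  { unfold Rdiv. rewrite ln_mult, ln_Rinv by (try apply Rinv_0_lt_compat; lra). ring. }
  assert (H := exp_ineq1_le (ln ((a - h) / a))).
  rewrite exp_ln in H by (apply Rdiv_lt_0_compat; lra).
  replace ((a - h) / a) with (1 - h / a) in * by (field; lra). lra.
Qed.

(** Upper Riemann sum of [1/(1 - X)] over [[0, th]] with [n] cells. *)
Definition upper_sum (th : R) (n : nat) : R :=
  rsum (fun i => th / INR n * / (1 - INR (S i) * (th / INR n))) n.

Lemma upper_sum_bound th n : 0 < th < 1 -> (0 < n)%nat ->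
  0 <= upper_sum th n <= - ln (1 - th) + th / INR n * (/ (1 - th) - 1).
Proof.
  intros Hth Hn. unfold upper_sum. set (h := th / INR n).
  assert (HnR : 0 < INR n) by (apply lt_0_INR; lia).
  assert (Hh : 0 < h) by (unfold h; apply Rdiv_lt_0_compat; lra).
  assert (Hcell : forall i, (i <= n)%nat -> 0 < 1 - INR i * h).
  { intros i Hi. assert (INR i * h <= th); [|lra].
    replace th with (INR n * h) by (unfold h; field; lra).
    apply Rmult_le_compat_r; [lra|apply le_INR; lia]. }
  set (f := fun i : nat => / (1 - INR i * h)).
  split.
  - apply rsum_nonneg. intros i Hi. specialize (Hcell (S i) ltac:(lia)).
    apply Rmult_le_pos; [lra|apply Rlt_le, Rinv_0_lt_compat; lra].
  - (* shift the sum by one cell, then compare each cell with ln *)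
    rewrite (rsum_ext _ (fun i => h * f i + (- (h * f i) - - (h * f (S i))))) by
      (intros i _; unfold f; ring).
    rewrite rsum_plus, rsum_tele.
    assert (Hf0 : f 0%nat = 1) by (unfold f; simpl; rewrite Rmult_0_l, Rminus_0_r, Rinv_1; auto).
    assert (Hfn : f n = / (1 - th)) by (unfold f, h; f_equal; field; lra).
    assert (Hln : rsum (fun i => h * f i) n
                  <= rsum (fun i => ln (1 - INR i * h) - ln (1 - INR (S i) * h)) n).
    { apply rsum_le. intros i Hi. unfold f.
      replace (1 - INR (S i) * h) with ((1 - INR i * h) - h) by (rewrite S_INR; ring).
      replace (h * / (1 - INR i * h)) with (h / (1 - INR i * h)) by (unfold Rdiv; ring).
      apply riemann_step_ln; auto.
      assert (HS := Hcell (S i) ltac:(lia)). rewrite S_INR in HS. lra. }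
    rewrite (rsum_tele (fun i => ln (1 - INR i * h))) in Hln.
    replace (INR n * h) with th in Hln by (unfold h; field; lra).
    simpl INR in Hln. rewrite Rmult_0_l, Rminus_0_r, ln_1 in Hln.
    rewrite Hf0, Hfn. lra.
Qed.

Lemma upper_sum_small Rad : 0 < Rad ->
  exists n, (0 < n)%nat /\ 0 <= upper_sum (rad_tanh Rad) n <= 2 * Rad.
Proof.
  intros HR. destruct (rad_tanh_bounds Rad HR) as [Hth HL]. set (th := rad_tanh Rad) in *.
  destruct (INR_unbounded (th * th / (1 - th) / (2 * Rad + ln (1 - th)))) as [n0 Hn0].
  exists (S n0). split; [lia|].
  assert (HnR : 0 < INR (S n0)) by (apply lt_0_INR; lia).
  destruct (upper_sum_bound th (S n0) Hth ltac:(lia)) as [HU0 HU]. split; auto.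
  assert (th / INR (S n0) * (/ (1 - th) - 1) <= 2 * Rad + ln (1 - th)); [|lra].
  replace (th / INR (S n0) * (/ (1 - th) - 1)) with (th * th / (1 - th) / INR (S n0))
    by (field; lra).
  apply Rmult_le_reg_r with (INR (S n0)); auto.
  replace (th * th / (1 - th) / INR (S n0) * INR (S n0)) with (th * th / (1 - th))
    by (field; lra).
  apply Rmult_lt_compat_l with (r := 2 * Rad + ln (1 - th)) in Hn0; [|lra].
  replace ((2 * Rad + ln (1 - th)) * (th * th / (1 - th) / (2 * Rad + ln (1 - th))))
    with (th * th / (1 - th)) in Hn0 by (field; lra).
  rewrite S_INR. nra.
Qed.

Definition density_region (k0 th : R) (q : pt * R) : Prop :=
  0 <= fst (fst q) <= th /\ - th <= snd (fst q) <= th /\ 0 <= snd q /\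
  snd q < k0 / ((1 - fst (fst q)) * (1 - Rabs (snd (fst q)))).

(** The grid covering the region: over each cell [[i h, (i+1) h] x [j h, (j+1) h]]
    and its mirror image in [Y], a box whose height is the value of the
    density at the far corner. *)
Definition cell_height (k0 h : R) (i j : nat) : R :=
  k0 * / (1 - INR (S i) * h) * / (1 - INR (S j) * h).

Definition cell_up (k0 h : R) (i j : nat) : box3 :=
  Box3 (INR i * h) (INR (S i) * h) (INR j * h) (INR (S j) * h) 0 (cell_height k0 h i j).

Definition cell_down (k0 h : R) (i j : nat) : box3 :=
  Box3 (INR i * h) (INR (S i) * h) (- (INR (S j) * h)) (- (INR j * h)) 0 (cell_height k0 h i j).

Definition density_grid (k0 h : R) (n : nat) : list box3 :=
  flat_map (fun i => flat_map (fun j => cell_up k0 h i j :: cell_down k0 h i j :: nil)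
                              (seq 0 n)) (seq 0 n).

Section DensityGrid.
Variables (k0 th : R) (n : nat).
Hypotheses (Hk0 : 0 < k0) (Hth : 0 < th < 1) (Hn : (0 < n)%nat).

Let h := th / INR n.

Lemma grid_step : 0 < h /\ INR n * h = th /\ forall i, (i < n)%nat -> INR (S i) * h <= th.
Proof.
  assert (HnR : 0 < INR n) by (apply lt_0_INR; lia).
  assert (Hnh : INR n * h = th) by (unfold h; field; lra).
  split; [apply Rdiv_lt_0_compat; lra|split; auto].
  intros i Hi. rewrite <- Hnh. apply Rmult_le_compat_r; [unfold h; apply Rle_mult_inv_pos; lra|].
  apply le_INR. lia.
Qed.

Lemma density_grid_covers q : density_region k0 th q ->
  exists b, In b (density_grid k0 h n) /\ in_box3 b q.
Proof.
  destruct grid_step as [Hh [Hnh Hi]].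
  destruct q as [[X Y] y]. intros [HX [HY [Hy0 Hy1]]]. simpl in HX, HY, Hy0, Hy1.
  destruct (grid_cell n 0 h X) as [i [Hi1 Hi2]]; [lia|lra|rewrite Hnh; lra|].
  assert (Hiv := Hi i Hi1).
  assert (Hht : forall j, (j < n)%nat -> Rabs Y <= INR (S j) * h -> y <= cell_height k0 h i j).
  { intros j Hj HYj. assert (Hjv := Hi j Hj). unfold cell_height.
    assert (/ (1 - X) <= / (1 - INR (S i) * h)) by (apply Rinv_le_contravar; lra).
    assert (/ (1 - Rabs Y) <= / (1 - INR (S j) * h)) by (apply Rinv_le_contravar; lra).
    assert (0 < / (1 - X)) by (apply Rinv_0_lt_compat; lra).
    assert (0 < / (1 - Rabs Y)) by (apply Rinv_0_lt_compat; lra).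
    replace (k0 / ((1 - X) * (1 - Rabs Y))) with (k0 * (/ (1 - X) * / (1 - Rabs Y)))
      in Hy1 by (field; lra).
    assert (/ (1 - X) * / (1 - Rabs Y)
            <= / (1 - INR (S i) * h) * / (1 - INR (S j) * h)) by (apply Rmult_le_compat; lra).
    nra. }
  assert (Hin : forall j b, (j < n)%nat -> (b = cell_up k0 h i j \/ b = cell_down k0 h i j) ->
                            In b (density_grid k0 h n)).
  { intros j b Hj Hb. apply in_flat_map. exists i. split; [apply in_seq; lia|].
    apply in_flat_map. exists j. split; [apply in_seq; lia|].
    destruct Hb as [->| ->]; simpl; auto. }
  destruct (Rle_dec 0 Y) as [hY|hY].
  - destruct (grid_cell n 0 h Y) as [j [Hj1 Hj2]]; [lia|lra|rewrite Hnh; lra|].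
    exists (cell_up k0 h i j). split; [apply (Hin j); auto|].
    unfold cell_up, in_box3. cbn [b3x1 b3x2 b3y1 b3y2 b3z1 b3z2 fst snd].
    split; [lra|split; [lra|split; [lra|apply Hht; auto; rewrite Rabs_right; lra]]].
  - destruct (grid_cell n 0 h (- Y)) as [j [Hj1 Hj2]]; [lia|lra|rewrite Hnh; lra|].
    exists (cell_down k0 h i j). split; [apply (Hin j); auto|].
    unfold cell_down, in_box3. cbn [b3x1 b3x2 b3y1 b3y2 b3z1 b3z2 fst snd].
    split; [lra|split; [lra|split; [lra|apply Hht; auto; rewrite Rabs_left; lra]]].
Qed.

Lemma density_grid_volume :
  lsum box3_vol (density_grid k0 h n) = 2 * k0 * (upper_sum th n * upper_sum th n).
Proof.
  destruct grid_step as [Hh [Hnh Hi]].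
  set (H := fun i : nat => / (1 - INR (S i) * h)).
  unfold density_grid. rewrite lsum_flat_map.
  rewrite (rsum_ext _ (fun i => 2 * k0 * rsum (fun j => (h * H i) * (h * H j)) n)).
  - rewrite rsum_scal, rsum_prod. unfold upper_sum, H. fold h. ring.
  - intros i Hi1. rewrite lsum_flat_map, <- rsum_scal. apply rsum_ext.
    intros j Hj1. simpl lsum. unfold cell_up, cell_down, box3_vol.
    cbn [b3x1 b3x2 b3y1 b3y2 b3z1 b3z2].
    assert (0 < H i) by (apply Rinv_0_lt_compat; specialize (Hi i Hi1); lra).
    assert (0 < H j) by (apply Rinv_0_lt_compat; specialize (Hi j Hj1); lra).
    replace (cell_height k0 h i j) with (k0 * H i * H j) by reflexivity.
    assert (0 <= k0 * H i * H j) by (apply Rmult_le_pos; [apply Rmult_le_pos|]; lra).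
    rewrite !S_INR.
    replace ((INR i + 1) * h - INR i * h) with h by ring.
    replace ((INR j + 1) * h - INR j * h) with h by ring.
    replace (- (INR j * h) - - ((INR j + 1) * h)) with h by ring.
    rewrite Rminus_0_r, !(Rmax_right 0 h), (Rmax_right 0 (k0 * H i * H j)) by lra. ring.
Qed.

Lemma density_region_cover : exists s, cover_sum3 (density_region k0 th) s /\
  s <= 2 * k0 * (upper_sum th n * upper_sum th n).
Proof.
  destruct (cov_of_list box3 (pt * R) box3_vol in_box3 box3_vol_nn box3_0 box3_0_vol
              (density_region k0 th) (density_grid k0 h n)) as [s [Hs Hsb]].
  - exact density_grid_covers.
  - exists s. split; auto. rewrite <- density_grid_volume. exact Hsb.
Qed.

End DensityGrid.

Section SymmetricSides.
Variables (C : pt -> Prop) (P Q : pt).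
Hypotheses (hopen : is_open C) (hbdd : is_bounded C) (hconv : is_convex C)
  (h0 : C porig) (hPQ : P <> Q)
  (hseg1 : forall x, segment P Q x -> boundary C x)
  (hseg2 : forall x, segment (popp P) (popp Q) x -> boundary C x).

Let hD : det2 P Q <> 0 := boundary_segment_independent C P Q hopen hconv h0 hPQ hseg1.

Local Notation X := (Xc P Q).
Local Notation Y := (Yc P Q).
Local Notation T := (open_hull4 P Q (popp P) (popp Q)).

Lemma sides_boundary_C z : X z = 1 -> Rabs (Y z) < 1 -> boundary C z /\ boundary C (popp z).
Proof.
  intros H1 H2. split.
  - apply hseg1, (side_PQ P Q hD); auto; lra.
  - apply hseg2, (side_mPmQ P Q hD); coords hD; [lra|]. rewrite Rabs_Ropp. lra.
Qed.

Lemma sides_boundary_T z : X z = 1 -> Rabs (Y z) < 1 -> boundary T z /\ boundary T (popp z).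
Proof.
  intros H1 H2. split; apply (T_boundary P Q hD); coords hD; rewrite ?Rabs_Ropp, ?H1, ?Rabs_R1; auto.
Qed.

(** [T] is contained in [C]: a point of [T] is a convex combination of two
    points obtained by pulling boundary points of the two sides slightly
    towards [0]. *)
Lemma T_sub_C x : T x -> C x.
Proof.
  intro Hx. apply (T_char P Q hD) in Hx. destruct Hx as [hX hY].
  set (m := Rmax (Rabs (X x)) (Rabs (Y x))).
  assert (HmX : Rabs (X x) <= m) by apply Rmax_l. assert (HmY : Rabs (Y x) <= m) by apply Rmax_r.
  assert (Hm : 0 <= m < 1)
    by (unfold m, Rmax; destruct Rle_dec; specialize (Rabs_pos (X x)); specialize (Rabs_pos (Y x)); lra).
  set (t := (1 - m) / 2).
  set (X' := X x / (1 - t)). set (Y' := Y x / (1 - t)).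
  assert (HX' : -1 < X' < 1 /\ -1 < Y' < 1).
  { apply Rabs_def2 in hX, hY. unfold X', Y', t.
    split; split; apply Rmult_lt_reg_r with (1 - (1 - m) / 2); try lra;
      field_simplify; try lra; apply Rabs_le_inv in HmX, HmY; lra. }
  set (z1 := coord_inv P Q (1, Y')). set (z2 := coord_inv P Q (-1, Y')).
  assert (Bz1 : boundary C z1)
    by (apply hseg1, (side_PQ P Q hD); unfold z1; coords hD; simpl; auto; apply Rabs_le; lra).
  assert (Bz2 : boundary C z2)
    by (apply hseg2, (side_mPmQ P Q hD); unfold z2; coords hD; simpl; auto; apply Rabs_le; lra).
  assert (Cw1 : C (padd (pscal (1 - t) z1) (pscal t porig)))
    by (apply closure_interior_comb; auto; [apply Bz1|unfold t; lra]).
  assert (Cw2 : C (padd (pscal (1 - t) z2) (pscal t porig)))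
    by (apply closure_interior_comb; auto; [apply Bz2|unfold t; lra]).
  replace x with (padd (pscal (1 - (1 + X') / 2) (padd (pscal (1 - t) z2) (pscal t porig)))
                       (pscal ((1 + X') / 2) (padd (pscal (1 - t) z1) (pscal t porig)))).
  - apply hconv; auto. lra.
  - apply (coords_inj P Q hD); unfold z1, z2; coords hD; simpl; unfold X', Y', t; field; lra.
Qed.

(** Part (1): on the triangle, the Hilbert balls of [C] and [T] agree, both
    being [X < tanh Rad]. *)
Lemma hilbert_balls_agree Rad x :
  (hilbert_ball C Rad x /\ open_hull3 P porig Q x) <->
  (hilbert_ball T Rad x /\ open_hull3 P porig Q x).
Proof.
  assert (HC : forall x, open_hull3 P porig Q x ->
    (hilbert_ball C Rad x <-> / 2 * ln ((1 + X x) / (1 - X x)) < Rad)).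
  { intros y Hy. apply (hilbert_ball_triangle P Q hD); auto.
    - apply T_sub_C, (triangle_in_T P Q hD); auto.
    - apply sides_boundary_C. }
  assert (HT : forall x, open_hull3 P porig Q x ->
    (hilbert_ball T Rad x <-> / 2 * ln ((1 + X x) / (1 - X x)) < Rad)).
  { intros y Hy. apply (hilbert_ball_triangle P Q hD); auto.
    - apply (T_open P Q hD); auto.
    - apply (T_conv P Q hD); auto.
    - apply (T_origin P Q hD); auto.
    - apply (triangle_in_T P Q hD); auto.
    - apply sides_boundary_T. }
  split; intros [H1 H2]; split; auto.
  - apply HT, HC; auto.
  - apply HC, HT; auto.
Qed.

(** The Finsler unit ball at a point [p] of the triangle contains the
    parallelogram [p + coord_inv ((-(1 - X), 1 - X) x (-(1 - |Y|), 1 - |Y|))],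
    whose symmetric translates stay in [T]; hence the density is at most
    [PI / (2 |D| (1 - X) (1 - |Y|))]. *)
Lemma density_bound p : 0 < X p < 1 -> Rabs (Y p) < X p ->
  hilbert_density C p <= PI / (2 * Rabs (det2 P Q) * (1 - X p) * (1 - Rabs (Y p))).
Proof.
  intros HX HY. apply Rabs_def2 in HY as HY'.
  destruct (closure_bounded C hbdd) as [M [HM0 HM]].
  assert (HDa : 0 < Rabs (det2 P Q)) by (apply Rabs_pos_lt, hD).
  assert (HinT : forall u, Rabs (fst u) < 1 - X p -> Rabs (snd u) < 1 - Rabs (Y p) ->
    T (padd p (coord_inv P Q u)) /\ T (padd p (popp (coord_inv P Q u)))).
  { intros u Hu1 Hu2. apply Rabs_def2 in Hu1.
    split; apply (T_char P Q hD); coords hD; split; try (apply Rabs_def1; lra);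
      eapply Rle_lt_trans; try apply Rabs_triang; rewrite ?Rabs_Ropp; lra. }
  assert (Hvol : Rabs ((fst P + fst Q) / 2 * ((snd Q - snd P) / 2)
                       - (fst Q - fst P) / 2 * ((snd P + snd Q) / 2))
                 * (4 * (1 - X p) * (1 - Rabs (Y p))) <= lebesgue2 (finsler_ball C p)).
  { apply lebesgue2_ge_lin_rect with (M := M); try lra.
    - rewrite coord_inv_det. intro H. apply hD. lra.
    - intros v Hv. apply (finsler_ball_bounded C M p v HM0 HM Hv).
    - intros u Hu1 Hu2. change (finsler_ball C p (coord_inv P Q u)).
      destruct (HinT u Hu1 Hu2) as [H1 H2].
      apply finsler_ball_of_symmetric; auto; apply T_sub_C; auto.
      apply (T_char P Q hD). split; apply Rabs_def1; lra. }
  rewrite coord_inv_det in Hvol. unfold Rdiv in Hvol. rewrite Rabs_mult, (Rabs_right (/ 2)) in Hvol by lra.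
  unfold hilbert_density. unfold Rdiv. apply Rmult_le_compat_l; [specialize PI_RGT_0; lra|].
  apply Rinv_le_contravar; [|lra]. repeat apply Rmult_lt_0_compat; lra.
Qed.

Lemma subgraph_in_density_region Rad p y :
  (hilbert_ball C Rad p /\ open_hull3 P porig Q p) /\ 0 <= y < hilbert_density C p ->
  density_region (PI / (2 * Rabs (det2 P Q))) (rad_tanh Rad) (lift3 (coord_map P Q) (p, y)).
Proof.
  intros [[Hb Ht] [Hy0 Hy1]]. unfold lift3. simpl fst. rewrite (coord_map_eq P Q).
  destruct (triangle_coords P Q hD p Ht) as [HX HY].
  assert (Hlt : X p < rad_tanh Rad).
  { apply lt_rad_tanh; auto.
    apply (hilbert_ball_triangle P Q hD C p Rad hopen hconv h0); auto.
    - apply T_sub_C, (triangle_in_T P Q hD); auto.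
    - apply sides_boundary_C. }
  assert (Hd := density_bound p HX HY). apply Rabs_def2 in HY as HY'.
  assert (HDa : 0 < Rabs (det2 P Q)) by (apply Rabs_pos_lt, hD).
  unfold density_region; simpl fst; simpl snd. repeat split; try lra.
  replace (PI / (2 * Rabs (det2 P Q)) / ((1 - X p) * (1 - Rabs (Y p))))
    with (PI / (2 * Rabs (det2 P Q) * (1 - X p) * (1 - Rabs (Y p)))); [lra|].
  field. lra.
Qed.

(** Part (2): the change of variables to [(X, Y)] and the grid cover give
    [mu_C <= |D|/2 * 2 (PI / (2 |D|)) U^2 <= PI/2 (2 Rad)^2 = 2 PI Rad^2]. *)
Lemma hilbert_measure_triangle Rad : 0 < Rad ->
  hilbert_measure_le C (fun x => hilbert_ball C Rad x /\ open_hull3 P porig Q x)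
    (2 * PI * Rad ^ 2).
Proof.
  intros HR e He.
  destruct (rad_tanh_bounds Rad HR) as [Hth _].
  destruct (upper_sum_small Rad HR) as [n [Hn [HU0 HU]]].
  assert (HDa : 0 < Rabs (det2 P Q)) by (apply Rabs_pos_lt, hD).
  set (k0 := PI / (2 * Rabs (det2 P Q))).
  assert (Hk0 : 0 < k0) by (unfold k0; apply Rdiv_lt_0_compat; specialize PI_RGT_0; lra).
  destruct (density_region_cover k0 (rad_tanh Rad) n Hk0 Hth Hn) as [s0 [Hs0 Hs0b]].
  set (U := upper_sum (rad_tanh Rad) n) in *.
  assert (Hscale : scales box3_vol in_box3 (lift3 (coord_map P Q)) (Rabs (det2 P Q) / 2)).
  { replace (Rabs (det2 P Q) / 2) with (/ Rabs (2 / det2 P Q))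
      by (unfold Rdiv; rewrite Rabs_mult, Rabs_inv, (Rabs_right 2) by lra; field; lra).
    rewrite <- (coord_map_det P Q hD). apply lin_scales3.
    rewrite (coord_map_det P Q hD). unfold Rdiv. apply Rmult_integral_contrapositive.
    split; [lra|apply Rinv_neq_0_compat, hD]. }
  destruct (Hscale _ s0 e Hs0 He) as [s1 [Hs1 Hs1b]].
  exists s1. split.
  - eapply cov_mono; [exact Hs1|]. intros [p y] Hpy. apply subgraph_in_density_region, Hpy.
  - assert (Rabs (det2 P Q) / 2 * s0 <= Rabs (det2 P Q) / 2 * (2 * k0 * (U * U)))
      by (apply Rmult_le_compat_l; lra).
    replace (Rabs (det2 P Q) / 2 * (2 * k0 * (U * U))) with (PI / 2 * (U * U)) in H
      by (unfold k0; field; lra).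
    assert (U * U <= 4 * Rad ^ 2) by nra.
    specialize PI_RGT_0. intros. nra.
Qed.

End SymmetricSides.

Theorem lemma2p5 (C : pt -> Prop) (P Q : pt)
  (hopen : is_open C) (hbdd : is_bounded C) (hconv : is_convex C)
  (h0 : C porig) (hPQ : P <> Q)
  (hseg1 : forall x, segment P Q x -> boundary C x)
  (hseg2 : forall x, segment (popp P) (popp Q) x -> boundary C x)
  (Rad : R) (hR : 0 < Rad) :
  (forall x,
     (hilbert_ball C Rad x /\ open_hull3 P porig Q x) <->
     (hilbert_ball (open_hull4 P Q (popp P) (popp Q)) Rad x /\
      open_hull3 P porig Q x)) /\
  hilbert_measure_le C
    (fun x => hilbert_ball C Rad x /\ open_hull3 P porig Q x)
    (2 * PI * Rad ^ 2).
Proof.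
  split.
  - intros x. apply hilbert_balls_agree; auto.
  - apply hilbert_measure_triangle; auto.
Qed.
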